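(* Let $(\mathcal E,B)$ be a product system (with unitaries $B_{s,t}:\mathcal E_{s+t}\to\mathcal E_s\otimes\mathcal E_t$) and let $F=(F_t)_{t>0}$ be an inclusion subsystem of $(\mathcal E,B)$. For $t>0$ set $$\tilde F_t=\overline{\mathrm{span}}\{x\otimes y: x\in\mathcal E_r\ominus F_r,\ y\in\mathcal E_{t-r}\ominus F_{t-r}\text{ for some }0<r<t\}\subset\mathcal E_t$$ (using $\mathcal E_t\cong\mathcal E_r\otimes\mathcal E_{t-r}$ via $B_{r,t-r}$) and $F'_t=\mathcal E_t\ominus\tilde F_t$. Then $(F'_t,B_{s,t}|_{F'_{s+t}})$ is an inclusion system, i.e. $B_{s,t}(F'_{s+t})\subset F'_s\otimes F'_t$ for all $s,t>0$.
   Context: A product system is a measurable family of separable Hilbert spaces $(\mathcal E_t)_{t>0}$ with unitaries $B_{s,t}:\mathcal E_{s+t}\to\mathcal E_s\otimes\mathcal E_t$ satisfying $(B_{r,s}\otimes 1)B_{r+s,t}=(1\otimes B_{s,t})B_{r,s+t}$. An inclusion system is a family of Hilbert spaces $E_t$ with isometries $\beta_{s,t}:E_{s+t}\to E_s\otimes E_t$ satisfying the same associativity relation. An inclusion subsystem of $(\mathcal E,B)$ is a family of closed subspaces $F_t\subset\mathcal E_t$ with $B_{s,t}(F_{s+t})\subset F_s\otimes F_t$ for all $s,t>0$. *)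

(* Hilbert spaces are modelled concretely
   as l^2(I) over a countable index type I, with values in C = R[i]
   (R = Stdlib reals, a realType via Rstruct). *)
From HB Require Import structures.
From mathcomp Require Import all_boot all_order all_algebra.
From mathcomp Require Import all_classical all_reals.
From mathcomp Require Import complex Rstruct.
Set Implicit Arguments.
Unset Strict Implicit.
Unset Printing Implicit Defensive.
Import Order.TTheory GRing.Theory Num.Theory.
Local Open Scope ring_scope.
Local Open Scope classical_set_scope.

Notation RR := Rdefinitions.R.
Notation CC := (RR[i]).

Section Hilbert.
Variable I : countType.

Definition sqn (z : CC) : RR := complex.Re z ^+ 2 + complex.Im z ^+ 2.

Definition psums (x : I -> CC) : set RR :=
  [set r | exists s : seq I, uniq s /\ r = \sum_(i <- s) sqn (x i)].

Definition l2 : set (I -> CC) := [set x | has_ubound (psums x)].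

Definition nrm2 (x : I -> CC) : RR := sup (psums x).

Definition vadd (x y : I -> CC) : I -> CC := fun i => x i + y i.
Definition vsub (x y : I -> CC) : I -> CC := fun i => x i - y i.
Definition vscale (c : CC) (x : I -> CC) : I -> CC := fun i => c * x i.
Definition vzero : I -> CC := fun _ => 0.

Definition rc (r : RR) : CC := complex.Complex r 0.

(* inner product <x,y> (linear in x) via the polarization identity *)
Definition ip (x y : I -> CC) : CC :=
  (rc (nrm2 (vadd x y)) - rc (nrm2 (vsub x y))
   + 'i * rc (nrm2 (vadd x (vscale 'i y)))
   - 'i * rc (nrm2 (vsub x (vscale 'i y)))) / 4%:R.

Definition closed_subspace (F : set (I -> CC)) : Prop :=
  [/\ F `<=` l2, F vzero,
      (forall x y, F x -> F y -> F (vadd x y)),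
      (forall c x, F x -> F (vscale c x)) &
      (forall x, l2 x ->
         (forall e : RR, 0 < e -> exists2 y, F y & nrm2 (vsub x y) < e) ->
         F x)].

Definition ocompl (F : set (I -> CC)) : set (I -> CC) :=
  [set x | l2 x /\ forall y, F y -> ip x y = 0].

Definition span (S : set (I -> CC)) : set (I -> CC) :=
  [set x | exists (n : nat) (c : 'I_n -> CC) (v : 'I_n -> I -> CC),
      (forall k, S (v k)) /\ x = (fun i => \sum_(k < n) c k * v k i)].

Definition cspan (S : set (I -> CC)) : set (I -> CC) :=
  [set x | l2 x /\
      forall e : RR, 0 < e -> exists2 y, span S y & nrm2 (vsub x y) < e].

End Hilbert.

Arguments l2 {I}.
Arguments nrm2 {I}.

(* l^2(I) (x) l^2(J) = l^2(I * J); elementary tensors *)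
Definition tv (I J : countType) (x : I -> CC) (y : J -> CC) : (I * J)%type -> CC :=
  fun p => x p.1 * y p.2.

Definition tsub (I J : countType) (F : set (I -> CC)) (G : set (J -> CC))
  : set ((I * J)%type -> CC) :=
  cspan [set z | exists x y, F x /\ G y /\ z = tv x y].

Definition unitary (I J : countType) (U : (I -> CC) -> (J -> CC)) : Prop :=
  [/\ (forall x, l2 x -> l2 (U x)),
      (forall x y, l2 x -> l2 y -> U (vadd x y) = vadd (U x) (U y)),
      (forall c x, l2 x -> U (vscale c x) = vscale c (U x)),
      (forall x, l2 x -> nrm2 (U x) = nrm2 x) &
      (forall y, l2 y -> exists2 x, l2 x & U x = y)].

(* U (x) 1 and 1 (x) U, acting slice-wise *)
Definition ampl_l (I J K : countType) (U : (I -> CC) -> (J -> CC))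
  (z : (I * K)%type -> CC) : (J * K)%type -> CC :=
  fun p => U (fun a => z (a, p.2)) p.1.

Definition ampl_r (I J K : countType) (U : (I -> CC) -> (J -> CC))
  (z : (K * I)%type -> CC) : (K * J)%type -> CC :=
  fun p => U (fun b => z (p.1, b)) p.2.

(* canonical identification (H1 (x) H2) (x) H3 = H1 (x) (H2 (x) H3) *)
Definition reassoc (I J K : countType) (z : ((I * J) * K)%type -> CC)
  : (I * (J * K))%type -> CC :=
  fun p => z ((p.1, p.2.1), p.2.2).

Definition castv (Ind : RR -> countType) (u v : RR) (e : u = v)
  (x : Ind u -> CC) : Ind v -> CC :=
  eq_rect u (fun w => Ind w -> CC) x v e.

(* Product system: E_t = l^2(Ind t) for t > 0, with unitaries
   B s t : E_(s+t) -> E_s (x) E_t satisfying associativity. *)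
Definition product_system (Ind : RR -> countType)
  (B : forall s t : RR, (Ind (s + t) -> CC) -> ((Ind s * Ind t)%type -> CC)) : Prop :=
  (forall s t : RR, 0 < s -> 0 < t -> unitary (B s t)) /\
  (forall r s t : RR, 0 < r -> 0 < s -> 0 < t ->
     forall x : Ind (r + s + t) -> CC, l2 x ->
       reassoc (ampl_l (B r s) (B (r + s) t x)) =
       ampl_r (B s t) (B r (s + t) (castv (esym (addrA r s t)) x))).

Definition inclusion_subsystem (Ind : RR -> countType)
  (B : forall s t : RR, (Ind (s + t) -> CC) -> ((Ind s * Ind t)%type -> CC))
  (F : forall t : RR, set (Ind t -> CC)) : Prop :=
  (forall t : RR, 0 < t -> closed_subspace (F t)) /\
  (forall s t : RR, 0 < s -> 0 < t ->
     forall x, F (s + t) x -> tsub (F s) (F t) (B s t x)).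

Lemma split_time (r t : RR) : t = r + (t - r).
Proof. by rewrite addrC subrK. Qed.

Definition Ftilde (Ind : RR -> countType)
  (B : forall s t : RR, (Ind (s + t) -> CC) -> ((Ind s * Ind t)%type -> CC))
  (F : forall t : RR, set (Ind t -> CC)) (t : RR) : set (Ind t -> CC) :=
  cspan [set z | l2 z /\ exists r : RR, [/\ 0 < r, r < t &
           exists x y, [/\ ocompl (F r) x, ocompl (F (t - r)) y &
              B r (t - r) (castv (split_time r t) z) = tv x y]]].

Arguments Ftilde {Ind} B F t.

Definition Fprime (Ind : RR -> countType)
  (B : forall s t : RR, (Ind (s + t) -> CC) -> ((Ind s * Ind t)%type -> CC))
  (F : forall t : RR, set (Ind t -> CC)) (t : RR) : set (Ind t -> CC) :=
  ocompl (Ftilde B F t).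

Arguments Fprime {Ind} B F t.

From Pilot Require Import Defs.
From HB Require Import structures.
From mathcomp Require Import all_boot all_order all_algebra.
From mathcomp Require Import all_classical all_reals.
From mathcomp Require Import complex Rstruct.
From mathcomp Require Import ring lra.
Import Order.TTheory GRing.Theory Num.Theory.
Local Open Scope ring_scope.
Local Open Scope classical_set_scope.
Set Implicit Arguments.
Unset Strict Implicit.
Unset Printing Implicit Defensive.

(* Since the orthogonal complement of [Ftilde_s (x) E_t + E_s (x) Ftilde_t]
   is [F'_s (x) F'_t], it suffices that [B_{s,t} x] is orthogonal to [g (x) y]
   for every generator [g] of [Ftilde_s] and every [y] (and symmetrically).
   Write [B_{r,s-r} g = a (x) b] with [a] orthogonal to [F_r] and [b]
   orthogonal to [F_{s-r}]. By associativity,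
   [B_{s,t}^-1 (g (x) y) = B_{r,s+t-r}^-1 (a (x) c)] with
   [c = B_{s-r,t}^-1 (b (x) y)], and [c] is orthogonal to [F_{s+t-r}] because
   [B_{s-r,t}] maps [F_{s+t-r}] into [F_{s-r} (x) F_t]. So
   [B_{s,t}^-1 (g (x) y)] is a generator of [Ftilde_{s+t}], to which [x] is
   orthogonal. *)

(** * Complex numbers *)

Lemma ReD (a b : CC) : complex.Re (a + b) = complex.Re a + complex.Re b.
Proof. by case: a; case: b. Qed.
Lemma ImD (a b : CC) : complex.Im (a + b) = complex.Im a + complex.Im b.
Proof. by case: a; case: b. Qed.
Lemma ReN (a : CC) : complex.Re (- a) = - complex.Re a.
Proof. by case: a. Qed.
Lemma ImN (a : CC) : complex.Im (- a) = - complex.Im a.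
Proof. by case: a. Qed.
Lemma ReM (a b : CC) :
  complex.Re (a * b) = complex.Re a * complex.Re b - complex.Im a * complex.Im b.
Proof. by case: a; case: b. Qed.
Lemma ImM (a b : CC) :
  complex.Im (a * b) = complex.Re a * complex.Im b + complex.Im a * complex.Re b.
Proof. by case: a; case: b. Qed.
Lemma Re_rc r : complex.Re (rc r) = r. Proof. by []. Qed.
Lemma Im_rc r : complex.Im (rc r) = 0. Proof. by []. Qed.
Lemma Re_conj (a : CC) : complex.Re (conjc a) = complex.Re a. Proof. by case: a. Qed.
Lemma Im_conj (a : CC) : complex.Im (conjc a) = - complex.Im a. Proof. by case: a. Qed.

Lemma complex_eq (a b : CC) :
  complex.Re a = complex.Re b -> complex.Im a = complex.Im b -> a = b.
Proof. by case: a; case: b => ? ? ? ? /= -> ->. Qed.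

Lemma complex_eq0 (a : CC) : complex.Re a = 0 -> complex.Im a = 0 -> a = 0.
Proof. by case: a => ? ? /= -> ->. Qed.

Lemma invc4 : (4%:R : CC)^-1 = rc (4%:R^-1).
Proof.
have -> : rc (4%:R^-1) = ((4%:R^-1 : RR)%:C)%C by [].
by rewrite fmorphV rmorph_nat.
Qed.

Lemma Re_div4 (z : CC) : complex.Re (z / 4%:R) = complex.Re z / 4%:R.
Proof. by rewrite invc4 ReM Re_rc Im_rc mulr0 subr0. Qed.

Lemma Im_div4 (z : CC) : complex.Im (z / 4%:R) = complex.Im z / 4%:R.
Proof. by rewrite invc4 ImM Re_rc Im_rc mulr0 add0r. Qed.

Lemma rcM a b : rc a * rc b = rc (a * b).
Proof. by apply: complex_eq => /=; rewrite ?mulr0 ?mul0r ?subr0 ?addr0. Qed.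

Lemma conj_rc a : conjc (rc a) = rc a.
Proof. by apply: complex_eq => /=; rewrite ?oppr0. Qed.

(* The ['i] in [ip] is [Num.imaginary], whose components are computed only
   up to conversion; the last two cases refold the Stdlib real constants. *)
Ltac simp_i := repeat match goal with
  | |- context [@complex.Im ?R (@Num.imaginary ?C)] =>
      change (@complex.Im R (@Num.imaginary C)) with (1 : RR)
  | |- context [@complex.Re ?R (@Num.imaginary ?C)] =>
      change (@complex.Re R (@Num.imaginary C)) with (0 : RR)
  | |- context [Rdefinitions.RbaseSymbolsImpl.R0] =>
      change Rdefinitions.RbaseSymbolsImpl.R0 with (0 : RR)
  | |- context [Rdefinitions.RbaseSymbolsImpl.R1] =>
      change Rdefinitions.RbaseSymbolsImpl.R1 with (1 : RR)
  end.

Lemma sqn_ge0 (z : CC) : 0 <= sqn z.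
Proof. by rewrite /sqn addr_ge0 // sqr_ge0. Qed.

Lemma sqn0 : sqn (0 : CC) = 0.
Proof. by rewrite /sqn /=; simp_i; rewrite expr0n addr0. Qed.

Lemma sqn_rc k : sqn (rc k) = k ^+ 2.
Proof. by rewrite /sqn Re_rc Im_rc expr0n addr0. Qed.

Lemma sqnM (a b : CC) : sqn (a * b) = sqn a * sqn b.
Proof. rewrite /sqn ReM ImM; ring. Qed.

Lemma sqnD_le (a b : CC) : sqn (a + b) <= 2 * sqn a + 2 * sqn b.
Proof.
rewrite /sqn ReD ImD; have := sqr_ge0 (complex.Re a - complex.Re b).
have := sqr_ge0 (complex.Im a - complex.Im b); nra.
Qed.

Lemma sqn_eq0 (a : CC) : sqn a = 0 -> a = 0.
Proof.
case: a => a1 a2; rewrite /sqn /= => h.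
have h1 := sqr_ge0 a1; have h2 := sqr_ge0 a2.
have /eqP : a1 ^+ 2 = 0 by lra.
have /eqP : a2 ^+ 2 = 0 by lra.
by rewrite !sqrf_eq0 => /eqP -> /eqP ->.
Qed.

Lemma normr_small_eq0 (a : RR) : (forall d : RR, 0 < d -> `|a| <= d) -> a = 0.
Proof.
move=> h; apply/eqP; rewrite -normr_le0; apply/ler_addgt0Pr => d hd.
by rewrite add0r; exact: h.
Qed.

(** * Unordered sums *)

Section Net.
Variable I : countType.
Implicit Types f g : seq I -> RR.

(* Convergence of [f s] along the finite index sequences directed by
   inclusion: the unordered sums of l^2 are such limits. *)
Definition netlim f (l : RR) :=
  forall e : RR, 0 < e -> exists s0 : seq I,
    forall s, uniq s -> {subset s0 <= s} -> `|f s - l| < e.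

Lemma uniq_superseq (s0 s1 : seq I) :
  exists s, [/\ uniq s, {subset s0 <= s} & {subset s1 <= s}].
Proof.
exists (undup (s0 ++ s1)); split; first exact: undup_uniq.
  by move=> x hx; rewrite mem_undup mem_cat hx.
by move=> x hx; rewrite mem_undup mem_cat hx orbT.
Qed.

Lemma netlim_le f g l m : netlim f l -> netlim g m ->
  (exists s1 : seq I, forall s, uniq s -> {subset s1 <= s} -> f s <= g s) -> l <= m.
Proof.
move=> hf hg [s1 hfg]; apply/ler_addgt0Pr => e he.
have he2 : 0 < e / 2 by rewrite divr_gt0.
case: (hf _ he2) => s0 h0; case: (hg _ he2) => s2 h2.
case: (uniq_superseq s0 (s1 ++ s2)) => s [us h0s h12s].
have h1s : {subset s1 <= s} by move=> x hx; apply: h12s; rewrite mem_cat hx.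
have h2s : {subset s2 <= s} by move=> x hx; apply: h12s; rewrite mem_cat hx orbT.
have := h0 s us h0s; have := h2 s us h2s; have := hfg s us h1s.
rewrite !ltr_norml; lra.
Qed.

Lemma netlim_eq f g l m : netlim f l -> netlim g m -> (forall s, f s = g s) -> l = m.
Proof.
move=> hf hg h; apply/le_anti/andP; split.
  by apply: (netlim_le hf hg); exists [::] => s _ _; rewrite h.
by apply: (netlim_le hg hf); exists [::] => s _ _; rewrite h.
Qed.

Lemma eq_netlim f g l : netlim f l -> (forall s, uniq s -> f s = g s) -> netlim g l.
Proof.
move=> hf hfg e he; case: (hf _ he) => s0 h0; exists s0 => s us hs.
by rewrite -hfg //; exact: h0.
Qed.

Lemma netlimD f g l m : netlim f l -> netlim g m -> netlim (fun s => f s + g s) (l + m).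
Proof.
move=> hf hg e he; have he2 : 0 < e / 2 by rewrite divr_gt0.
case: (hf _ he2) => s0 h0; case: (hg _ he2) => s1 h1.
case: (uniq_superseq s0 s1) => s2 [_ h02 h12].
exists s2 => s us hs.
have := h0 s us (fun x hx => hs _ (h02 _ hx)).
have := h1 s us (fun x hx => hs _ (h12 _ hx)).
have : `|f s + g s - (l + m)| <= `|f s - l| + `|g s - m|.
  by rewrite -[f s + g s - (l + m)](_ : (f s - l) + (g s - m) = _) ?ler_normD //; ring.
lra.
Qed.

Lemma netlimZ c f l : netlim f l -> netlim (fun s => c * f s) (c * l).
Proof.
move=> hf e he; have he2 : 0 < e / (`|c| + 1) by rewrite divr_gt0 // ltr_wpDl.
case: (hf _ he2) => s0 h0; exists s0 => s us hs.
rewrite -mulrBr normrM.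
move: (h0 s us hs); rewrite ltr_pdivlMr ?ltr_wpDl // => h.
have : `|f s - l| * `|c| <= `|f s - l| * (`|c| + 1) by rewrite ler_wpM2l // lerDl.
rewrite mulrC; lra.
Qed.

Lemma netlimN f l : netlim f l -> netlim (fun s => - f s) (- l).
Proof.
move=> h; have := netlimZ (-1) h; rewrite mulN1r => h'.
by apply: (eq_netlim h') => s _; rewrite mulN1r.
Qed.

Lemma netlim_lin f g l m a b : netlim f l -> netlim g m ->
  netlim (fun s => a * f s + b * g s) (a * l + b * m).
Proof. by move=> hf hg; apply: netlimD; apply: netlimZ. Qed.

Lemma sum_lin (s : seq I) (F G H : I -> RR) a b :
  (forall i, H i = a * F i + b * G i) ->
  \sum_(i <- s) H i = a * \sum_(i <- s) F i + b * \sum_(i <- s) G i.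
Proof. by move=> h; rewrite (eq_bigr _ (fun i _ => h i)) big_split /= -!mulr_sumr. Qed.

Lemma ler_sum_subseq (f : I -> RR) (s0 s : seq I) : (forall i, 0 <= f i) ->
  uniq s0 -> uniq s -> {subset s0 <= s} -> \sum_(i <- s0) f i <= \sum_(i <- s) f i.
Proof.
move=> f0 u0 us hs.
have hp : perm_eq [seq i <- s | mem s0 i] s0.
  apply: uniq_perm => //; first exact: filter_uniq.
  by move=> x; rewrite mem_filter; apply/andP/idP => [[]|h] //; split=> //; exact: hs.
rewrite -(perm_big _ hp) big_filter [X in _ <= X](bigID (mem s0)) /=.
by rewrite lerDl sumr_ge0.
Qed.
End Net.

(** * The space l^2 *)

Section L2.
Variable I : countType.
Implicit Types x y : I -> CC.

Definition psum (s : seq I) x := \sum_(i <- s) sqn (x i).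

Lemma psum_ge0 s x : 0 <= psum s x.
Proof. by rewrite /psum sumr_ge0 // => i _; apply: sqn_ge0. Qed.

Lemma psum1 i x : psum [:: i] x = sqn (x i).
Proof. by rewrite /psum big_seq1. Qed.

Lemma psums_psum x s : uniq s -> psums x (psum s x).
Proof. by move=> us; exists s. Qed.

Lemma psum_le_nrm2 x s : l2 x -> uniq s -> psum s x <= nrm2 x.
Proof. by move=> hx us; apply: (ub_le_sup hx); apply: psums_psum. Qed.

Lemma nrm2_le x M : (forall s, uniq s -> psum s x <= M) -> nrm2 x <= M.
Proof.
move=> h; apply: ge_sup; first by exists (psum [::] x); apply: psums_psum.
by move=> r [s [us ->]]; apply: h.
Qed.

Lemma l2_bound x M : (forall s, uniq s -> psum s x <= M) -> l2 x.
Proof. by move=> h; exists M => r [s [us ->]]; apply: h. Qed.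

Lemma nrm2_ge0 x : l2 x -> 0 <= nrm2 x.
Proof. by move=> hx; apply: le_trans (psum_le_nrm2 hx (s:=[::]) _); rewrite ?psum_ge0. Qed.

Lemma sqn_le_nrm2 x i : l2 x -> sqn (x i) <= nrm2 x.
Proof. by move=> hx; rewrite -psum1; apply: psum_le_nrm2. Qed.

Lemma nrm2_adherent x e : l2 x -> 0 < e -> exists2 s, uniq s & nrm2 x - e < psum s x.
Proof.
move=> hx he; have hs : has_sup (psums x).
  by split=> //; exists (psum [::] x); apply: psums_psum.
by case: (sup_adherent he hs) => r [s [us ->]] h; exists s.
Qed.

Lemma netlim_nrm2 x : l2 x -> netlim (fun s => psum s x) (nrm2 x).
Proof.
move=> hx e he; case: (nrm2_adherent hx he) => s0 u0 h0; exists s0 => s us hs.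
have h1 := psum_le_nrm2 hx us.
have h2 : psum s0 x <= psum s x by apply: ler_sum_subseq => // i; apply: sqn_ge0.
rewrite ler0_norm ?subr_le0 //; lra.
Qed.

Lemma psumD_le s x y : psum s (vadd x y) <= 2 * psum s x + 2 * psum s y.
Proof.
rewrite /psum !mulr_sumr -big_split /=; apply: ler_sum => i _; exact: sqnD_le.
Qed.

Lemma psumZ s c x : psum s (vscale c x) = sqn c * psum s x.
Proof. by rewrite /psum mulr_sumr; apply: eq_bigr => i _; rewrite /vscale sqnM. Qed.

Lemma nrm2D_le x y : l2 x -> l2 y -> nrm2 (vadd x y) <= 2 * nrm2 x + 2 * nrm2 y.
Proof.
move=> hx hy; apply: nrm2_le => s us; apply: le_trans (psumD_le s x y) _.
by apply: lerD; apply: ler_wpM2l => //; apply: psum_le_nrm2.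
Qed.

Lemma l2_add x y : l2 x -> l2 y -> l2 (vadd x y).
Proof.
move=> hx hy; apply: (@l2_bound _ (2 * nrm2 x + 2 * nrm2 y)) => s us.
apply: le_trans (psumD_le s x y) _.
by apply: lerD; apply: ler_wpM2l => //; apply: psum_le_nrm2.
Qed.

Lemma l2_scale c x : l2 x -> l2 (vscale c x).
Proof.
move=> hx; apply: (@l2_bound _ (sqn c * nrm2 x)) => s us.
by rewrite psumZ ler_wpM2l ?sqn_ge0 // psum_le_nrm2.
Qed.

Lemma vsub_addN x y : vsub x y = vadd x (vscale (-1) y).
Proof. by apply: funext => i; rewrite /vsub /vadd /vscale mulN1r. Qed.

Lemma vsubK x y : vadd (vsub x y) y = x.
Proof. by apply: funext => i; rewrite /vadd /vsub subrK. Qed.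

Lemma l2_sub x y : l2 x -> l2 y -> l2 (vsub x y).
Proof. by move=> hx hy; rewrite vsub_addN; apply: l2_add => //; apply: l2_scale. Qed.

Lemma nrm2_scale c x : l2 x -> nrm2 (vscale c x) = sqn c * nrm2 x.
Proof.
move=> hx; apply: (netlim_eq (netlim_nrm2 (l2_scale c hx)) (netlimZ (sqn c) (netlim_nrm2 hx))).
by move=> s; rewrite psumZ.
Qed.

Lemma psum_vzero s : psum s (@vzero I) = 0.
Proof. by rewrite /psum big1 // => i _; rewrite /vzero sqn0. Qed.

Lemma l2_zero : l2 (@vzero I).
Proof. by apply: (@l2_bound _ 0) => s _; rewrite psum_vzero. Qed.

Lemma nrm2_zero : nrm2 (@vzero I) = 0.
Proof.
apply/le_anti; rewrite nrm2_ge0 ?andbT; last exact: l2_zero.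
by apply: nrm2_le => s _; rewrite psum_vzero.
Qed.

Lemma nrm2_le0 x : l2 x -> nrm2 x <= 0 -> x = @vzero I.
Proof.
move=> hx h; apply: funext => i; apply: sqn_eq0; apply/le_anti; rewrite sqn_ge0 andbT.
exact: le_trans (sqn_le_nrm2 i hx) h.
Qed.
End L2.

(** * The inner product *)

Section InnerProduct.
Variable I : countType.
Implicit Types x y u d : I -> CC.

Definition ReT x y (i : I) :=
  complex.Re (x i) * complex.Re (y i) + complex.Im (x i) * complex.Im (y i).
Definition ImT x y (i : I) :=
  complex.Im (x i) * complex.Re (y i) - complex.Re (x i) * complex.Im (y i).

Lemma Re_ip x y : complex.Re (ip x y) = (nrm2 (vadd x y) - nrm2 (vsub x y)) / 4%:R.
Proof. rewrite /ip Re_div4 !ReD !ReN !ReM !Re_rc !Im_rc; simp_i; ring. Qed.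

Lemma Im_ip x y : complex.Im (ip x y) =
  (nrm2 (vadd x (vscale 'i y)) - nrm2 (vsub x (vscale 'i y))) / 4%:R.
Proof. rewrite /ip Im_div4 !ImD !ImN !ImM !Re_rc !Im_rc; simp_i; ring. Qed.

(* Polarization turns the four norms of [ip] into the absolutely summable
   series of [ReT] and [ImT]. *)
Lemma netlim_Re_ip x y : l2 x -> l2 y ->
  netlim (fun s => \sum_(i <- s) ReT x y i) (complex.Re (ip x y)).
Proof.
move=> hx hy; rewrite Re_ip.
have h := netlim_lin (4%:R^-1) (- 4%:R^-1)
  (netlim_nrm2 (l2_add hx hy)) (netlim_nrm2 (l2_sub hx hy)).
have -> : (nrm2 (vadd x y) - nrm2 (vsub x y)) / 4%:R =
  4%:R^-1 * nrm2 (vadd x y) + - 4%:R^-1 * nrm2 (vsub x y) by ring.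
apply: (eq_netlim h) => s _; rewrite /psum.
symmetry; apply: sum_lin => i.
by rewrite /ReT /sqn /vadd /vsub !ReD !ImD !ReN !ImN; field.
Qed.

Lemma netlim_Im_ip x y : l2 x -> l2 y ->
  netlim (fun s => \sum_(i <- s) ImT x y i) (complex.Im (ip x y)).
Proof.
move=> hx hy; rewrite Im_ip; have hiy := l2_scale 'i hy.
have h := netlim_lin (4%:R^-1) (- 4%:R^-1)
  (netlim_nrm2 (l2_add hx hiy)) (netlim_nrm2 (l2_sub hx hiy)).
have -> : (nrm2 (vadd x (vscale 'i y)) - nrm2 (vsub x (vscale 'i y))) / 4%:R =
  4%:R^-1 * nrm2 (vadd x (vscale 'i y)) + - 4%:R^-1 * nrm2 (vsub x (vscale 'i y)) by ring.
apply: (eq_netlim h) => s _; rewrite /psum.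
symmetry; apply: sum_lin => i.
rewrite /ImT /sqn /vadd /vsub /vscale !ReD !ImD !ReN !ImN !ReM !ImM; simp_i; by field.
Qed.

Lemma ipDl x x' y : l2 x -> l2 x' -> l2 y -> ip (vadd x x') y = ip x y + ip x' y.
Proof.
move=> hx hx' hy; have hxx := l2_add hx hx'; apply: complex_eq; rewrite ?ReD ?ImD.
  apply: (netlim_eq (netlim_Re_ip hxx hy)
    (netlimD (netlim_Re_ip hx hy) (netlim_Re_ip hx' hy))) => s.
  by rewrite -big_split /=; apply: eq_bigr => i _; rewrite /ReT /vadd ReD ImD; ring.
apply: (netlim_eq (netlim_Im_ip hxx hy)
  (netlimD (netlim_Im_ip hx hy) (netlim_Im_ip hx' hy))) => s.
by rewrite -big_split /=; apply: eq_bigr => i _; rewrite /ImT /vadd ReD ImD; ring.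
Qed.

Lemma ipDr x y y' : l2 x -> l2 y -> l2 y' -> ip x (vadd y y') = ip x y + ip x y'.
Proof.
move=> hx hy hy'; have hyy := l2_add hy hy'; apply: complex_eq; rewrite ?ReD ?ImD.
  apply: (netlim_eq (netlim_Re_ip hx hyy)
    (netlimD (netlim_Re_ip hx hy) (netlim_Re_ip hx hy'))) => s.
  by rewrite -big_split /=; apply: eq_bigr => i _; rewrite /ReT /vadd ReD ImD; ring.
apply: (netlim_eq (netlim_Im_ip hx hyy)
  (netlimD (netlim_Im_ip hx hy) (netlim_Im_ip hx hy'))) => s.
by rewrite -big_split /=; apply: eq_bigr => i _; rewrite /ImT /vadd ReD ImD; ring.
Qed.

Lemma ipZl c x y : l2 x -> l2 y -> ip (vscale c x) y = c * ip x y.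
Proof.
move=> hx hy; have hcx := l2_scale c hx; apply: complex_eq.
  rewrite [complex.Re (_ * ip x y)]ReM.
  have -> : complex.Re (ip (vscale c x) y) =
      complex.Re c * complex.Re (ip x y) + (- complex.Im c) * complex.Im (ip x y).
    apply: (netlim_eq (netlim_Re_ip hcx hy)
      (netlim_lin _ _ (netlim_Re_ip hx hy) (netlim_Im_ip hx hy))) => s.
    by apply: sum_lin => i; rewrite /ReT /ImT /vscale ReM ImM; ring.
  ring.
rewrite [complex.Im (_ * ip x y)]ImM.
have -> : complex.Im (ip (vscale c x) y) =
    complex.Re c * complex.Im (ip x y) + complex.Im c * complex.Re (ip x y).
  apply: (netlim_eq (netlim_Im_ip hcx hy)
    (netlim_lin _ _ (netlim_Im_ip hx hy) (netlim_Re_ip hx hy))) => s.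
  by apply: sum_lin => i; rewrite /ReT /ImT /vscale ReM ImM; ring.
ring.
Qed.

Lemma ipZr x c y : l2 x -> l2 y -> ip x (vscale c y) = conjc c * ip x y.
Proof.
move=> hx hy; have hcy := l2_scale c hy; apply: complex_eq.
  rewrite [complex.Re (_ * ip x y)]ReM Re_conj Im_conj.
  have -> : complex.Re (ip x (vscale c y)) =
      complex.Re c * complex.Re (ip x y) + complex.Im c * complex.Im (ip x y).
    apply: (netlim_eq (netlim_Re_ip hx hcy)
      (netlim_lin _ _ (netlim_Re_ip hx hy) (netlim_Im_ip hx hy))) => s.
    by apply: sum_lin => i; rewrite /ReT /ImT /vscale ReM ImM; ring.
  ring.
rewrite [complex.Im (_ * ip x y)]ImM Re_conj Im_conj.
have -> : complex.Im (ip x (vscale c y)) =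
    complex.Re c * complex.Im (ip x y) + (- complex.Im c) * complex.Re (ip x y).
  apply: (netlim_eq (netlim_Im_ip hx hcy)
    (netlim_lin _ _ (netlim_Im_ip hx hy) (netlim_Re_ip hx hy))) => s.
  by apply: sum_lin => i; rewrite /ReT /ImT /vscale ReM ImM; ring.
ring.
Qed.

Lemma ipC x y : l2 x -> l2 y -> ip y x = conjc (ip x y).
Proof.
move=> hx hy; apply: complex_eq.
  rewrite Re_conj; apply: (netlim_eq (netlim_Re_ip hy hx) (netlim_Re_ip hx hy)) => s.
  by apply: eq_bigr => i _; rewrite /ReT; ring.
rewrite Im_conj; apply: (netlim_eq (netlim_Im_ip hy hx) (netlimN (netlim_Im_ip hx hy))) => s.
by rewrite -sumrN; apply: eq_bigr => i _; rewrite /ImT; ring.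
Qed.

Lemma ip_eq0C x y : l2 x -> l2 y -> ip x y = 0 -> ip y x = 0.
Proof. by move=> hx hy h; rewrite ipC // h; apply: complex_eq0; rewrite /= ?oppr0. Qed.

Lemma ip0r x : l2 x -> ip x (@vzero I) = 0.
Proof.
move=> hx; have h0 := l2_zero I; have := ipDr hx h0 h0.
have -> : vadd (@vzero I) (@vzero I) = @vzero I by apply: funext => i; rewrite /vadd addr0.
by move=> h; apply: (addIr (ip x (@vzero I))); rewrite add0r -h.
Qed.

Lemma ReT_bound x y i : `|ReT x y i| <= (sqn (x i) + sqn (y i)) / 2.
Proof.
rewrite /ReT /sqn ler_norml.
have := sqr_ge0 (complex.Re (x i) - complex.Re (y i)).
have := sqr_ge0 (complex.Im (x i) - complex.Im (y i)).
have := sqr_ge0 (complex.Re (x i) + complex.Re (y i)).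
have := sqr_ge0 (complex.Im (x i) + complex.Im (y i)).
by move=> *; apply/andP; split; nra.
Qed.

Lemma ImT_bound x y i : `|ImT x y i| <= (sqn (x i) + sqn (y i)) / 2.
Proof.
rewrite /ImT /sqn ler_norml.
have := sqr_ge0 (complex.Im (x i) - complex.Re (y i)).
have := sqr_ge0 (complex.Re (x i) + complex.Im (y i)).
have := sqr_ge0 (complex.Im (x i) + complex.Re (y i)).
have := sqr_ge0 (complex.Re (x i) - complex.Im (y i)).
by move=> *; apply/andP; split; nra.
Qed.

Lemma netlim_norm_le (f : seq I -> RR) (g : I -> RR) l m :
  netlim f l -> netlim (fun s => \sum_(i <- s) g i) m ->
  (forall s, `|f s| <= \sum_(i <- s) g i) -> `|l| <= m.
Proof.
move=> hf hg h; rewrite ler_norml; apply/andP; split.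
  rewrite lerNl; apply: (netlim_le (netlimN hf) hg); exists [::] => s _ _.
  by rewrite lerNl; have := h s; rewrite ler_norml => /andP [].
by apply: (netlim_le hf hg); exists [::] => s _ _; have := h s; rewrite ler_norml => /andP [].
Qed.

Lemma ip_bound x y : l2 x -> l2 y ->
  `|complex.Re (ip x y)| <= (nrm2 x + nrm2 y) / 2 /\
  `|complex.Im (ip x y)| <= (nrm2 x + nrm2 y) / 2.
Proof.
move=> hx hy.
have hb : netlim (fun s => \sum_(i <- s) ((sqn (x i) + sqn (y i)) / 2)) ((nrm2 x + nrm2 y) / 2).
  have -> : (nrm2 x + nrm2 y) / 2 = 2^-1 * nrm2 x + 2^-1 * nrm2 y by ring.
  apply: (eq_netlim (netlim_lin 2^-1 2^-1 (netlim_nrm2 hx) (netlim_nrm2 hy))) => s _.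
  by symmetry; apply: sum_lin => i; ring.
split; apply: (netlim_norm_le _ hb).
- exact: netlim_Re_ip.
- move=> s; apply: le_trans (ler_norm_sum _ _ _) _; apply: ler_sum => i _; apply: ReT_bound.
- exact: netlim_Im_ip.
- move=> s; apply: le_trans (ler_norm_sum _ _ _) _; apply: ler_sum => i _; apply: ImT_bound.
Qed.

(* Rescaling [u] by [k] and [d] by [1/k] before [ip_bound]. *)
Lemma ip_bound_scaled u d (k : RR) : l2 u -> l2 d -> 0 < k ->
  `|complex.Re (ip u d)| <= (k ^+ 2 * nrm2 u + (k ^+ 2)^-1 * nrm2 d) / 2 /\
  `|complex.Im (ip u d)| <= (k ^+ 2 * nrm2 u + (k ^+ 2)^-1 * nrm2 d) / 2.
Proof.
move=> hu hd hk.
have -> : ip u d = ip (vscale (rc k) u) (vscale (rc k^-1) d).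
  rewrite ipZl ?ipZr //; last exact: l2_scale.
  by rewrite conj_rc mulrA rcM mulfV ?gt_eqF // mul1r.
have := ip_bound (l2_scale (rc k) hu) (l2_scale (rc k^-1) hd).
by rewrite !nrm2_scale // !sqn_rc exprVn.
Qed.

Lemma ip_small u (delta : RR) : l2 u -> 0 < delta -> exists2 eta : RR, 0 < eta &
  forall d, l2 d -> nrm2 d < eta ->
  `|complex.Re (ip u d)| <= delta /\ `|complex.Im (ip u d)| <= delta.
Proof.
move=> hu hdel; set N := nrm2 u; have hN : 0 <= N by apply: nrm2_ge0.
set k := Num.min 1 (delta / (N + 1)).
have hq : 0 < delta / (N + 1) by rewrite divr_gt0 // ltr_wpDl.
have hk : 0 < k by rewrite lt_min ltr01 hq.
have hk1 : k <= 1 by rewrite ge_min lexx.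
have hk2 : k <= delta / (N + 1) by rewrite ge_min lexx orbT.
have hkk : 0 < k ^+ 2 by rewrite exprn_gt0.
exists (delta * k ^+ 2); first by rewrite mulr_gt0.
move=> d hd hnd; have [b1 b2] := ip_bound_scaled hu hd hk.
have h1 : k ^+ 2 * N <= delta.
  have hkk1 : k ^+ 2 <= k by rewrite expr2 ger_pMl.
  have : k * (N + 1) <= delta by rewrite -ler_pdivlMr // ltr_wpDl.
  have : k ^+ 2 * N <= k * N by rewrite ler_wpM2r.
  nra.
have h2 : (k ^+ 2)^-1 * nrm2 d < delta by rewrite mulrC ltr_pdivrMr.
have h3 : (k ^+ 2 * N + (k ^+ 2)^-1 * nrm2 d) / 2 <= delta by lra.
by split; apply: le_trans h3.
Qed.
End InnerProduct.

(** * Closed linear spans *)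

Section Span.
Variable I : countType.
Implicit Types x y u : I -> CC.
Variable S : set (I -> CC).

Lemma span_ind (P : set (I -> CC)) : P (@vzero I) ->
  (forall x y, P x -> P y -> P (vadd x y)) ->
  (forall c x, P x -> P (vscale c x)) -> S `<=` P -> Defs.span S `<=` P.
Proof.
move=> P0 PD PZ SP x [n [c [v [hv ->]]]].
elim: n c v hv => [|n IH] c v hv.
  have -> : (fun i => \sum_(k < 0) c k * v k i) = @vzero I.
    by apply: funext => i; rewrite big_ord0.
  exact: P0.
have -> : (fun i => \sum_(k < n.+1) c k * v k i) =
  vadd (fun i => \sum_(k < n) c (widen_ord (leqnSn n) k) * v (widen_ord (leqnSn n) k) i)
       (vscale (c ord_max) (v ord_max)).
  by apply: funext => i; rewrite big_ord_recr.
apply: PD; first by apply: IH => k; apply: hv.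
by apply: PZ; apply: SP.
Qed.

Lemma span0 : Defs.span S (@vzero I).
Proof.
exists 0%N, (fun _ => 0), (fun _ => @vzero I); split=> [[]//|].
by apply: funext => i; rewrite big_ord0.
Qed.

Lemma span_gen x : S x -> Defs.span S x.
Proof.
move=> hx; exists 1%N, (fun _ => 1), (fun _ => x); split=> //.
by apply: funext => i; rewrite big_ord1 mul1r.
Qed.

Lemma span_scale c x : Defs.span S x -> Defs.span S (vscale c x).
Proof.
move=> [n [d [v [hv ->]]]]; exists n, (fun k => c * d k), v; split=> //.
by apply: funext => i; rewrite /vscale mulr_sumr; apply: eq_bigr => k _; rewrite mulrA.
Qed.

Lemma span_add x y : Defs.span S x -> Defs.span S y -> Defs.span S (vadd x y).
Proof.
move=> [n [c [v [hv ->]]]] [m [d [u [hu ->]]]].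
pose sel (T : Type) (a : 'I_n -> T) (b : 'I_m -> T) (k : 'I_(n + m)) :=
  match fintype.split k with inl i => a i | inr j => b j end.
exists (n + m)%N, (sel _ c d), (sel _ v u); split.
  by move=> k; rewrite /sel; case: (fintype.split k).
apply: funext => i; rewrite /vadd big_split_ord /= /sel.
by congr (_ + _); apply: eq_bigr => k _; rewrite ?(unsplitK (inl _ k)) ?(unsplitK (inr _ k)).
Qed.

Lemma span_sum (T : Type) (r : seq T) (f : T -> I -> CC) :
  (forall p, Defs.span S (f p)) -> Defs.span S (fun q => \sum_(p <- r) f p q).
Proof.
move=> h; elim: r => [|a r IH].
  have -> : (fun q => \sum_(p <- [::]) f p q) = @vzero I.
    by apply: funext => q; rewrite big_nil.
  exact: span0.
have -> : (fun q => \sum_(p <- a :: r) f p q) = vadd (f a) (fun q => \sum_(p <- r) f p q).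
  by apply: funext => q; rewrite big_cons.
exact: span_add.
Qed.

Hypothesis S_l2 : S `<=` l2.

Lemma span_l2 : Defs.span S `<=` l2.
Proof.
apply: span_ind => //; first exact: l2_zero.
  by move=> x y; apply: l2_add.
by move=> c x; apply: l2_scale.
Qed.

Lemma span_cspan : Defs.span S `<=` cspan S.
Proof.
move=> x hx; split; first exact: span_l2.
move=> e he; exists x => //.
have -> : vsub x x = @vzero I by apply: funext => i; rewrite /vsub subrr.
by rewrite nrm2_zero.
Qed.

Lemma ip_span_eq0 u : l2 u -> (forall g, S g -> ip u g = 0) ->
  forall w, Defs.span S w -> ip u w = 0.
Proof.
move=> hu h w hw.
suff : [set w | l2 w /\ ip u w = 0] w by case.
apply: span_ind hw.
- by split; [exact: l2_zero | exact: ip0r].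
- by move=> x y [hx ex] [hy ey]; split; [exact: l2_add | rewrite ipDr // ex ey addr0].
- by move=> c x [hx ex]; split; [exact: l2_scale | rewrite ipZr // ex mulr0].
- by move=> g hg; split; [exact: S_l2 | exact: h].
Qed.

Lemma ip_cspan_eq0 u : l2 u -> (forall g, S g -> ip u g = 0) ->
  forall w, cspan S w -> ip u w = 0.
Proof.
move=> hu h w [hw happ].
have small : forall delta : RR, 0 < delta ->
    `|complex.Re (ip u w)| <= delta /\ `|complex.Im (ip u w)| <= delta.
  move=> delta hdel; case: (ip_small hu hdel) => eta heta hsm.
  case: (happ _ heta) => y hy hny; have hyl := span_l2 hy.
  have -> : ip u w = ip u (vsub w y).
    by rewrite -{1}(vsubK w y) ipDr ?(ip_span_eq0 hu h hy) ?addr0 //; apply: l2_sub.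
  by apply: hsm => //; apply: l2_sub.
by apply: complex_eq0; apply: normr_small_eq0 => d hd; case: (small d hd).
Qed.

Lemma closed_subspace_cspan : closed_subspace (cspan S).
Proof.
split.
- by move=> x [].
- exact/span_cspan/span0.
- move=> x y [hx ax] [hy ay]; split; first exact: l2_add.
  move=> e he; have he4 : 0 < e / 4 by rewrite divr_gt0.
  case: (ax _ he4) => x' hx' nx; case: (ay _ he4) => y' hy' ny.
  exists (vadd x' y'); first exact: span_add.
  have -> : vsub (vadd x y) (vadd x' y') = vadd (vsub x x') (vsub y y').
    by apply: funext => i; rewrite /vsub /vadd; ring.
  have hxl := span_l2 hx'; have hyl := span_l2 hy'.
  apply: le_lt_trans (nrm2D_le (l2_sub hx hxl) (l2_sub hy hyl)) _; lra.
- move=> c x [hx ax]; split; first exact: l2_scale.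
  move=> e he; have he' : 0 < e / (sqn c + 1) by rewrite divr_gt0 // ltr_wpDl // sqn_ge0.
  case: (ax _ he') => x' hx' nx; exists (vscale c x'); first exact: span_scale.
  have hxl := span_l2 hx'.
  have -> : vsub (vscale c x) (vscale c x') = vscale c (vsub x x').
    by apply: funext => i; rewrite /vsub /vscale mulrBr.
  rewrite (nrm2_scale c (l2_sub hx hxl)).
  have h0 := sqn_ge0 c; have h1 := nrm2_ge0 (l2_sub hx hxl).
  move: nx; rewrite ltr_pdivlMr ?ltr_wpDl // => nx; nra.
- move=> x hx ax; split => // e he; have he4 : 0 < e / 4 by rewrite divr_gt0.
  case: (ax _ he4) => y [hy ay] nxy; case: (ay _ he4) => y' hy' nyy.
  exists y' => //; have hyl := span_l2 hy'.
  have -> : vsub x y' = vadd (vsub x y) (vsub y y').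
    by apply: funext => i; rewrite /vsub /vadd; ring.
  apply: le_lt_trans (nrm2D_le (l2_sub hx hy) (l2_sub hy hyl)) _; lra.
Qed.
End Span.

Lemma cspan_linear_image (I J : countType) (L : (I -> CC) -> (J -> CC)) (C : RR)
    (G : set (I -> CC)) g :
  G `<=` l2 -> (forall x, l2 x -> l2 (L x)) ->
  (forall x y, L (vadd x y) = vadd (L x) (L y)) ->
  (forall c x, L (vscale c x) = vscale c (L x)) ->
  (forall x, l2 x -> nrm2 (L x) <= C * nrm2 x) ->
  cspan G g -> cspan (L @` G) (L g).
Proof.
move=> hG hL LD LZ LC [hg ag]; split; first exact: hL.
have LB x y : L (vsub x y) = vsub (L x) (L y) by rewrite !vsub_addN LD LZ.
have L0 : L (@vzero I) = @vzero J.
  have -> : @vzero I = vscale 0 (@vzero I) by apply: funext => i; rewrite /vscale mul0r.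
  by rewrite LZ; apply: funext => j; rewrite /vscale mul0r.
move=> e he; set C' := `|C| + 1.
have hC' : 0 < C' by rewrite ltr_wpDl.
case: (ag (e / C')) => [|g' hg' ng]; first by rewrite divr_gt0.
have hdl := l2_sub hg (span_l2 hG hg').
exists (L g').
  apply: (span_ind (P := fun h => Defs.span (L @` G) (L h))) hg'.
  - by rewrite L0; exact: span0.
  - by move=> a b ha hb; rewrite LD; exact: span_add.
  - by move=> c a ha; rewrite LZ; exact: span_scale.
  - by move=> a ha; apply: span_gen; exists a.
rewrite -LB; apply: le_lt_trans (LC _ hdl) _.
have h0 := nrm2_ge0 hdl; have hC : C <= C' by rewrite /C' ltW // ltr_pwDr // real_ler_norm ?num_real.
move: ng; rewrite ltr_pdivlMr // => ng; nra.
Qed.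

(** * Elementary tensors *)

Section Tensor.
Variables I J : countType.

Definition pairs (s1 : seq I) (s2 : seq J) := [seq (i, j) | i <- s1, j <- s2].

Lemma pairs_uniq s1 s2 : uniq s1 -> uniq s2 -> uniq (pairs s1 s2).
Proof. by move=> u1 u2; apply: allpairs_uniq => // -[a b] [c d] _ _ /= ->. Qed.

Lemma sum_pairs (f : I -> RR) (g : J -> RR) s1 s2 :
  \sum_(p <- pairs s1 s2) f p.1 * g p.2 = (\sum_(i <- s1) f i) * (\sum_(j <- s2) g j).
Proof.
rewrite /pairs big_allpairs_dep /= mulr_suml; apply: eq_bigr => i _.
by rewrite mulr_sumr.
Qed.

Lemma subset_pairs (s0 : seq (I * J)) s1 s2 :
  {subset map fst s0 <= s1} -> {subset map snd s0 <= s2} -> {subset s0 <= pairs s1 s2}.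
Proof.
move=> h1 h2 [a b] h; apply/allpairsP; exists (a, b); split => //=.
  by apply: h1; apply/mapP; exists (a, b).
by apply: h2; apply/mapP; exists (a, b).
Qed.

Lemma psum_tv_le (a : I -> CC) (b : J -> CC) s : uniq s -> l2 a -> l2 b ->
  psum s (tv a b) <= nrm2 a * nrm2 b.
Proof.
move=> us ha hb; set s1 := undup (map fst s); set s2 := undup (map snd s).
apply: (@le_trans _ _ (\sum_(p <- pairs s1 s2) sqn (a p.1) * sqn (b p.2))).
  have -> : psum s (tv a b) = \sum_(p <- s) sqn (a p.1) * sqn (b p.2).
    by apply: eq_bigr => p _; rewrite /tv sqnM.
  apply: (@ler_sum_subseq _ (fun p => sqn (a p.1) * sqn (b p.2))) => //.
  - by move=> p; rewrite mulr_ge0 // sqn_ge0.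
  - by apply: pairs_uniq; apply: undup_uniq.
  - by apply: subset_pairs => x; rewrite mem_undup.
rewrite (sum_pairs (fun i => sqn (a i)) (fun j => sqn (b j))).
by apply: ler_pM; rewrite ?psum_ge0 ?psum_le_nrm2 ?undup_uniq.
Qed.

Lemma l2_tv (a : I -> CC) (b : J -> CC) : l2 a -> l2 b -> l2 (tv a b).
Proof. by move=> ha hb; apply: (@l2_bound _ _ (nrm2 a * nrm2 b)) => s us; apply: psum_tv_le. Qed.

Lemma nrm2_tv_le (a : I -> CC) (b : J -> CC) : l2 a -> l2 b ->
  nrm2 (tv a b) <= nrm2 a * nrm2 b.
Proof. by move=> ha hb; apply: nrm2_le => s us; apply: psum_tv_le. Qed.

Lemma cspan_tvl (G : set (I -> CC)) g (y : J -> CC) : G `<=` l2 -> l2 y ->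
  cspan G g -> cspan ((fun x => tv x y) @` G) (tv g y).
Proof.
move=> hG hy; apply: (@cspan_linear_image _ _ (fun x => tv x y) (nrm2 y)) => //.
- by move=> x hx; apply: l2_tv.
- by move=> x x'; apply: funext => p; rewrite /tv /vadd mulrDl.
- by move=> c x; apply: funext => p; rewrite /tv /vscale mulrA.
- by move=> x hx; rewrite mulrC; apply: nrm2_tv_le.
Qed.

Lemma cspan_tvr (G : set (J -> CC)) g (y : I -> CC) : G `<=` l2 -> l2 y ->
  cspan G g -> cspan (tv y @` G) (tv y g).
Proof.
move=> hG hy; apply: (@cspan_linear_image _ _ (tv y) (nrm2 y)) => //.
- by move=> x hx; apply: l2_tv.
- by move=> x x'; apply: funext => p; rewrite /tv /vadd mulrDr.
- by move=> c x; apply: funext => p; rewrite /tv /vscale mulrCA.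
- by move=> x hx; apply: nrm2_tv_le.
Qed.
End Tensor.

Lemma netlimM_pairs (I J : countType) (F1 : seq I -> RR) (F2 : seq J -> RR) l1 l2 :
  netlim F1 l1 -> netlim F2 l2 -> forall e : RR, 0 < e ->
  exists (s10 : seq I) (s20 : seq J), forall s1 s2, uniq s1 -> uniq s2 ->
    {subset s10 <= s1} -> {subset s20 <= s2} -> `|F1 s1 * F2 s2 - l1 * l2| < e.
Proof.
move=> h1 h2 e he.
have hq : 0 < e / (`|l1| + `|l2| + 1) by rewrite divr_gt0 // ltr_wpDl // addr_ge0.
set d := Num.min 1 (e / (`|l1| + `|l2| + 1)).
have hd : 0 < d by rewrite lt_min ltr01 hq.
have hd1 : d <= 1 by rewrite ge_min lexx.
have hd2 : d * (`|l1| + `|l2| + 1) <= e.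
  by rewrite -ler_pdivlMr ?ltr_wpDl ?addr_ge0 // ge_min lexx orbT.
case: (h1 _ hd) => s10 k1; case: (h2 _ hd) => s20 k2.
exists s10, s20 => s1 s2 u1 u2 i1 i2.
have a1 := k1 s1 u1 i1; have a2 := k2 s2 u2 i2.
set a := F1 s1 - l1 in a1; set b := F2 s2 - l2 in a2.
have -> : F1 s1 * F2 s2 - l1 * l2 = a * b + a * l2 + l1 * b by rewrite /a /b; ring.
have hn : `|a * b + a * l2 + l1 * b| <= `|a| * `|b| + `|a| * `|l2| + `|l1| * `|b|.
  by rewrite -!normrM; apply: le_trans (ler_normD _ _) _; rewrite lerD2r ler_normD.
apply: le_lt_trans hn _.
have n1 := normr_ge0 a; have n2 := normr_ge0 b.
have n3 := normr_ge0 l1; have n4 := normr_ge0 l2.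
have hab : `|a| * `|b| <= `|a| by rewrite ler_piMr // (le_trans (ltW a2)).
have h3 : `|a| * `|l2| <= d * `|l2| by rewrite ler_wpM2r // ltW.
have h4 : `|l1| * `|b| <= `|l1| * d by rewrite ler_wpM2l // ltW.
lra.
Qed.

(* A limit over finite subsets of [I * J] is determined by its values on
   rectangles [pairs s1 s2], which are cofinal. *)
Lemma netlim_pairs (I J : countType) (h : seq (I * J) -> RR) L
  (F1 G1 : seq I -> RR) (F2 G2 : seq J -> RR) l1 l2 m1 m2 :
  netlim h L -> netlim F1 l1 -> netlim F2 l2 -> netlim G1 m1 -> netlim G2 m2 ->
  (forall s1 s2, uniq s1 -> uniq s2 -> h (pairs s1 s2) = F1 s1 * F2 s2 + G1 s1 * G2 s2) ->
  L = l1 * l2 + m1 * m2.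
Proof.
move=> hh hF1 hF2 hG1 hG2 hp; apply/eqP; rewrite -subr_eq0; apply/eqP.
apply: normr_small_eq0 => d hd; have he : 0 < d / 3 by rewrite divr_gt0.
case: (hh _ he) => s0 k0.
case: (netlimM_pairs hF1 hF2 he) => a1 [a2 kF].
case: (netlimM_pairs hG1 hG2 he) => b1 [b2 kG].
set s1 := undup (a1 ++ b1 ++ map fst s0); set s2 := undup (a2 ++ b2 ++ map snd s0).
have u1 : uniq s1 by apply: undup_uniq.
have u2 : uniq s2 by apply: undup_uniq.
have sub1 x : x \in a1 ++ b1 ++ map fst s0 -> x \in s1 by rewrite mem_undup.
have sub2 x : x \in a2 ++ b2 ++ map snd s0 -> x \in s2 by rewrite mem_undup.
have hS : {subset s0 <= pairs s1 s2}.
  by apply: subset_pairs => x hx; [apply: sub1 | apply: sub2]; rewrite !mem_cat hx !orbT.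
have e0 := k0 _ (pairs_uniq u1 u2) hS.
have eF : `|F1 s1 * F2 s2 - l1 * l2| < d / 3.
  by apply: kF => // x hx; [apply: sub1 | apply: sub2]; rewrite mem_cat hx.
have eG : `|G1 s1 * G2 s2 - m1 * m2| < d / 3.
  by apply: kG => // x hx; [apply: sub1 | apply: sub2]; rewrite !mem_cat hx orbT.
rewrite hp // in e0.
have -> : L - (l1 * l2 + m1 * m2) = - (F1 s1 * F2 s2 + G1 s1 * G2 s2 - L)
    + (F1 s1 * F2 s2 - l1 * l2) + (G1 s1 * G2 s2 - m1 * m2) by ring.
apply: le_trans (ler_normD _ _) _; apply: le_trans (lerD (ler_normD _ _) (lexx _)) _.
rewrite normrN; lra.
Qed.

Section TensorInnerProduct.
Variables I J : countType.

Lemma ip_tv (a c : I -> CC) (b d : J -> CC) : l2 a -> l2 b -> l2 c -> l2 d ->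
  ip (tv a b) (tv c d) = ip a c * ip b d.
Proof.
move=> ha hb hc hd; have hab := l2_tv ha hb; have hcd := l2_tv hc hd.
apply: complex_eq.
  rewrite [complex.Re (ip a c * _)]ReM.
  have -> : complex.Re (ip a c) * complex.Re (ip b d) - complex.Im (ip a c) * complex.Im (ip b d) =
    complex.Re (ip a c) * complex.Re (ip b d) + (- complex.Im (ip a c)) * complex.Im (ip b d) by ring.
  apply: (netlim_pairs (netlim_Re_ip hab hcd) (netlim_Re_ip ha hc) (netlim_Re_ip hb hd)
    (netlimN (netlim_Im_ip ha hc)) (netlim_Im_ip hb hd)) => s1 s2 u1 u2.
  rewrite -sumrN -(sum_pairs (ReT a c) (ReT b d)) -(sum_pairs (fun i => - ImT a c i) (ImT b d)).
  rewrite -big_split /=; apply: eq_bigr => -[i j] _ /=.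
  rewrite /ReT /ImT /tv !ReM !ImM; ring.
rewrite [complex.Im (ip a c * _)]ImM.
apply: (netlim_pairs (netlim_Im_ip hab hcd) (netlim_Re_ip ha hc) (netlim_Im_ip hb hd)
  (netlim_Im_ip ha hc) (netlim_Re_ip hb hd)) => s1 s2 u1 u2.
rewrite -(sum_pairs (ReT a c) (ImT b d)) -(sum_pairs (ImT a c) (ReT b d)).
rewrite -big_split /=; apply: eq_bigr => -[i j] _ /=.
rewrite /ReT /ImT /tv !ReM !ImM; ring.
Qed.

Lemma ip_tv0l (a c : I -> CC) (b d : J -> CC) : l2 a -> l2 b -> l2 c -> l2 d ->
  ip a c = 0 -> ip (tv a b) (tv c d) = 0.
Proof. by move=> ha hb hc hd h; rewrite ip_tv // h mul0r. Qed.

Lemma ip_tv0r (a c : I -> CC) (b d : J -> CC) : l2 a -> l2 b -> l2 c -> l2 d ->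
  ip b d = 0 -> ip (tv a b) (tv c d) = 0.
Proof. by move=> ha hb hc hd h; rewrite ip_tv // h mulr0. Qed.
End TensorInnerProduct.

(** * Completeness and orthogonal projection *)

Lemma cauchy_cvg_real (a : nat -> RR) :
  (forall e : RR, 0 < e -> exists N, forall n m, (N <= n)%N -> (N <= m)%N ->
     `|a n - a m| < e) ->
  exists L, forall e : RR, 0 < e -> exists N, forall n, (N <= n)%N -> `|a n - L| < e.
Proof.
move=> hc; set E := [set x : RR | exists N, forall n, (N <= n)%N -> x <= a n].
case: (hc 1 ltr01) => N1 h1.
have hE : E (a N1 - 1).
  by exists N1 => n hn; have := h1 n N1 hn (leqnn _); rewrite ltr_norml; lra.
have hsup : has_ubound E.
  exists (a N1 + 1) => x [N' hN']; have := hN' (maxn N1 N') (leq_maxr _ _).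
  have := h1 (maxn N1 N') N1 (leq_maxl _ _) (leqnn _); rewrite ltr_norml; lra.
exists (sup E) => e he; have he2 : 0 < e / 2 by rewrite divr_gt0.
case: (hc _ he2) => N hN; exists N => n hn.
have l1 : a N - e / 2 <= sup E.
  apply: ub_le_sup => //; exists N => k hk.
  by have := hN k N hk (leqnn _); rewrite ltr_norml; lra.
have l2 : sup E <= a N + e / 2.
  apply: ge_sup; first by exists (a N1 - 1).
  move=> x [N' hN']; have := hN' (maxn N N') (leq_maxr _ _).
  have := hN (maxn N N') N (leq_maxl _ _) (leqnn _); rewrite ltr_norml; lra.
have := hN n N hn (leqnn _); rewrite !ltr_norml; lra.
Qed.

Lemma eventually_all_seq (T : eqType) (Q : T -> nat -> Prop) :
  (forall i, exists M, forall n, (M <= n)%N -> Q i n) ->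
  forall s : seq T, exists M, forall i, i \in s -> forall n, (M <= n)%N -> Q i n.
Proof.
move=> h; elim => [|a s [M hM]]; first by exists 0%N.
case: (h a) => Ma hMa; exists (maxn Ma M) => i; rewrite inE => /orP [/eqP -> | hi] n hn.
  by apply: hMa; apply: leq_trans hn; apply: leq_maxl.
by apply: hM => //; apply: leq_trans hn; apply: leq_maxr.
Qed.

Lemma inv_succ_small (e : RR) : 0 < e -> exists k, forall n, (k <= n)%N -> n.+1%:R^-1 < e.
Proof.
move=> he; case: (ltr_add_invr he) => k; rewrite add0r => hk.
exists k => n hkn; apply: le_lt_trans hk.
by rewrite lef_pV2 ?posrE ?ltr0Sn // ler_nat ltnS.
Qed.

Lemma sum_le_size_mul (I : eqType) (s : seq I) (f : I -> RR) (d : RR) :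
  (forall i, i \in s -> f i <= d) -> \sum_(i <- s) f i <= (size s)%:R * d.
Proof.
elim: s => [|a s IH] h; first by rewrite big_nil mul0r.
rewrite big_cons /= -add1n natrD mulrDl mul1r; apply: lerD.
  by apply: h; rewrite inE eqxx.
by apply: IH => i hi; apply: h; rewrite inE hi orbT.
Qed.

Section Completeness.
Variable I : countType.
Variable y : nat -> I -> CC.
Hypothesis y_l2 : forall n, l2 (y n).
Hypothesis y_cauchy : forall e : RR, 0 < e -> exists N, forall n m,
  (N <= n)%N -> (N <= m)%N -> nrm2 (vsub (y n) (y m)) < e.

Lemma cauchy_pointwise_limit : exists p : I -> CC,
  forall i (d : RR), 0 < d -> exists M, forall n, (M <= n)%N -> sqn (p i - y n i) <= d.
Proof.
have coord i (e : RR) : 0 < e -> exists N, forall n m, (N <= n)%N -> (N <= m)%N ->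
    `|complex.Re (y n i - y m i)| < e /\ `|complex.Im (y n i - y m i)| < e.
  move=> he; have he2 : 0 < e ^+ 2 by rewrite exprn_gt0.
  case: (y_cauchy he2) => N hN; exists N => n m hn hm.
  have := le_lt_trans (sqn_le_nrm2 i (l2_sub (y_l2 n) (y_l2 m))) (hN n m hn hm).
  rewrite /sqn /vsub => h; have h1 := sqr_ge0 (complex.Re (y n i - y m i)).
  have h2 := sqr_ge0 (complex.Im (y n i - y m i)).
  by split; rewrite ltr_norml; apply/andP; split; nra.
have /choice [Lr hLr] : forall i, exists L, forall e : RR, 0 < e ->
    exists N, forall n, (N <= n)%N -> `|complex.Re (y n i) - L| < e.
  move=> i; apply: cauchy_cvg_real => e he; case: (coord i e he) => N hN.
  by exists N => n m hn hm; case: (hN n m hn hm); rewrite ReD ReN.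
have /choice [Li hLi] : forall i, exists L, forall e : RR, 0 < e ->
    exists N, forall n, (N <= n)%N -> `|complex.Im (y n i) - L| < e.
  move=> i; apply: cauchy_cvg_real => e he; case: (coord i e he) => N hN.
  by exists N => n m hn hm; case: (hN n m hn hm); rewrite ImD ImN.
exists (fun i => Complex (Lr i) (Li i)) => i d hd; set e' := Num.min 1 (d / 2).
have he' : 0 < e' by rewrite lt_min ltr01 divr_gt0.
have he1 : e' <= 1 by rewrite ge_min lexx.
have he2 : e' <= d / 2 by rewrite ge_min lexx orbT.
case: (hLr i _ he') => M1 h1; case: (hLi i _ he') => M2 h2.
exists (maxn M1 M2) => n hn.
move: (h1 n (leq_trans (leq_maxl _ _) hn)) (h2 n (leq_trans (leq_maxr _ _) hn)).
rewrite /sqn ReD ImD ReN ImN /= !ltr_norml => /andP [a1 b1] /andP [a2 b2]; nra.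
Qed.

Lemma l2_complete : exists2 p, l2 p &
  forall e : RR, 0 < e -> exists N, forall n, (N <= n)%N -> nrm2 (vsub p (y n)) < e.
Proof.
case: cauchy_pointwise_limit => p hpt.
(* Each finite partial sum of |p - y n|^2 is controlled through a later y m,
   chosen close to p on that finite set of coordinates. *)
have tail : forall e : RR, 0 < e -> exists N, forall n, (N <= n)%N ->
    forall s, uniq s -> psum s (vsub p (y n)) <= e / 2.
  move=> e he; have he8 : 0 < e / 8 by rewrite divr_gt0.
  case: (y_cauchy he8) => N hN; exists N => n hn s us.
  set d := e / 8 / ((size s)%:R + 1).
  have hd : 0 < d by rewrite divr_gt0 // ltr_wpDl.
  case: (eventually_all_seq (fun i => hpt i d hd) s) => M hM.
  set m := maxn N M.
  have hsd : psum s (vsub p (y m)) <= e / 8.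
    apply: le_trans (sum_le_size_mul (d := d) _) _.
      by move=> i hi; apply: hM => //; apply: leq_maxr.
    have hz : 0 <= (size s)%:R :> RR by [].
    rewrite /d mulrA ler_pdivrMr ?ltr_wpDl //; nra.
  have hcm : psum s (vsub (y m) (y n)) < e / 8.
    apply: le_lt_trans (hN m n (leq_maxl _ _) hn).
    by apply: psum_le_nrm2 => //; apply: l2_sub.
  have : psum s (vsub p (y n)) <= 2 * psum s (vsub p (y m)) + 2 * psum s (vsub (y m) (y n)).
    have -> : vsub p (y n) = vadd (vsub p (y m)) (vsub (y m) (y n)).
      by apply: funext => i; rewrite /vadd /vsub; ring.
    exact: psumD_le.
  lra.
exists p.
  case: (tail 1 ltr01) => N hN; rewrite -(vsubK p (y N)); apply: l2_add => //.
  by apply: (@l2_bound _ _ (1 / 2)) => s us; apply: hN.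
move=> e he; case: (tail e he) => N hN; exists N => n hn.
by apply: le_lt_trans (nrm2_le (hN n hn)) _; lra.
Qed.
End Completeness.

Section Projection.
Variable I : countType.
Implicit Types x y z w a b q : I -> CC.

Lemma parallelogram a b : l2 a -> l2 b ->
  nrm2 (vadd a b) + nrm2 (vsub a b) = 2 * nrm2 a + 2 * nrm2 b.
Proof.
move=> ha hb; apply: (netlim_eq (netlimD (netlim_nrm2 (l2_add ha hb)) (netlim_nrm2 (l2_sub ha hb)))
  (netlim_lin 2 2 (netlim_nrm2 ha) (netlim_nrm2 hb))) => s.
rewrite /psum -big_split /=; apply: sum_lin => i.
by rewrite /sqn /vadd /vsub !ReD !ImD !ReN !ImN; ring.
Qed.

Lemma nrm2_subC a b : l2 a -> l2 b -> nrm2 (vsub a b) = nrm2 (vsub b a).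
Proof.
move=> ha hb; apply: (netlim_eq (netlim_nrm2 (l2_sub ha hb)) (netlim_nrm2 (l2_sub hb ha))) => s.
by apply: eq_bigr => i _; rewrite /sqn /vsub !ReD !ImD !ReN !ImN; ring.
Qed.

(* Parallelogram law for [x - a] and [x - b]: their half-sum is [x - (a + b)/2]. *)
Lemma nrm2_sub_le_midpoint x a b (D : RR) : l2 x -> l2 a -> l2 b ->
  D <= nrm2 (vsub x (vscale 2%:R^-1 (vadd a b))) ->
  nrm2 (vsub a b) <= 2 * nrm2 (vsub x a) + 2 * nrm2 (vsub x b) - 4 * D.
Proof.
move=> hx ha hb hD; have hm := l2_scale 2%:R^-1 (l2_add ha hb).
have := parallelogram (l2_sub hx hb) (l2_sub hx ha).
have -> : vsub (vsub x b) (vsub x a) = vsub a b by apply: funext => i; rewrite /vsub; ring.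
have -> : vadd (vsub x b) (vsub x a) = vscale 2%:R (vsub x (vscale 2%:R^-1 (vadd a b))).
  by apply: funext => i; rewrite /vadd /vsub /vscale; field.
rewrite (nrm2_scale _ (l2_sub hx hm)).
have -> : sqn (2%:R : CC) = 4 by rewrite /sqn /=; simp_i; ring.
lra.
Qed.

Lemma sqnD_le_weighted (a b : CC) (l : RR) : 0 < l ->
  sqn (a + b) <= (1 + l) * sqn a + (1 + l^-1) * sqn b.
Proof.
move=> hl; rewrite /sqn ReD ImD.
set a1 := complex.Re a; set a2 := complex.Im a; set b1 := complex.Re b; set b2 := complex.Im b.
have hm : 0 <= l^-1 by rewrite invr_ge0 ltW.
have hlm : l * l^-1 = 1 by rewrite mulfV // gt_eqF.
have k1 : 0 <= l^-1 * (l * a1 - b1) ^+ 2 by rewrite mulr_ge0 // sqr_ge0.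
have k2 : 0 <= l^-1 * (l * a2 - b2) ^+ 2 by rewrite mulr_ge0 // sqr_ge0.
have e1 : l^-1 * (l * a1 - b1) ^+ 2 =
  (l * l^-1) * (l * a1 ^+ 2) - 2 * (l * l^-1) * (a1 * b1) + l^-1 * b1 ^+ 2 by ring.
have e2 : l^-1 * (l * a2 - b2) ^+ 2 =
  (l * l^-1) * (l * a2 ^+ 2) - 2 * (l * l^-1) * (a2 * b2) + l^-1 * b2 ^+ 2 by ring.
rewrite hlm !mul1r in e1 e2; nra.
Qed.

Lemma nrm2D_le_weighted a b (l : RR) : l2 a -> l2 b -> 0 < l ->
  nrm2 (vadd a b) <= (1 + l) * nrm2 a + (1 + l^-1) * nrm2 b.
Proof.
move=> ha hb hl; apply: nrm2_le => s us.
apply: (@le_trans _ _ ((1 + l) * psum s a + (1 + l^-1) * psum s b)).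
  rewrite /psum -(@sum_lin _ s (fun i => sqn (a i)) (fun i => sqn (b i))
    (fun i => (1 + l) * sqn (a i) + (1 + l^-1) * sqn (b i))) //.
  by apply: ler_sum => i _; apply: sqnD_le_weighted.
have h1 : 0 <= 1 + l by rewrite addr_ge0 // ltW.
have h2 : 0 <= 1 + l^-1 by rewrite addr_ge0 // invr_ge0 ltW.
by apply: lerD; apply: ler_wpM2l => //; apply: psum_le_nrm2.
Qed.

Lemma nrm2_sub_scale w z c : l2 w -> l2 z ->
  nrm2 (vsub w (vscale c z)) = nrm2 w
    - 2 * (complex.Re c * complex.Re (ip w z) + complex.Im c * complex.Im (ip w z))
    + sqn c * nrm2 z.
Proof.
move=> hw hz; have hcz := l2_scale c hz.
have h := netlimD (netlimD (netlim_nrm2 hw) (netlimZ (-2) (netlim_lin (complex.Re c)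
  (complex.Im c) (netlim_Re_ip hw hz) (netlim_Im_ip hw hz)))) (netlimZ (sqn c) (netlim_nrm2 hz)).
rewrite -mulNr; apply: (netlim_eq (netlim_nrm2 (l2_sub hw hcz)) h) => s.
rewrite -(@sum_lin _ s (ReT w z) (ImT w z)
  (fun i => complex.Re c * ReT w z i + complex.Im c * ImT w z i)) //.
rewrite /psum !mulr_sumr -!big_split /=; apply: eq_bigr => i _.
rewrite /sqn /ReT /ImT /vsub /vscale ReD ImD ReN ImN ReM ImM; ring.
Qed.

(* Continuity of the norm, in the only form needed: the weight [l] trades the
   error on [x - y n] against the (arbitrarily small) error on [y n - q]. *)
Lemma nrm2_sub_le_of_cvg x q (y : nat -> I -> CC) (D : RR) :
  l2 x -> l2 q -> (forall n, l2 (y n)) -> 0 <= D ->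
  (forall e : RR, 0 < e -> exists N, forall n, (N <= n)%N -> nrm2 (vsub q (y n)) < e) ->
  (forall e : RR, 0 < e -> exists N, forall n, (N <= n)%N -> nrm2 (vsub x (y n)) < D + e) ->
  nrm2 (vsub x q) <= D.
Proof.
move=> hx hq hy hD0 hconv hdist; apply/ler_addgt0Pr => eta heta.
set l := eta / (2 * (D + 1)).
have hl : 0 < l by rewrite divr_gt0 // mulr_gt0 // ltr_wpDl.
have hl1 : 0 < 1 + l by rewrite addr_gt0.
have hm1 : 0 < 1 + l^-1 by rewrite addr_gt0 // invr_gt0.
have hlD : l * D <= eta / 2.
  have : l * (D + 1) = eta / 2 by rewrite /l; field; rewrite gt_eqF // ltr_wpDl.
  have : 0 <= l by apply: ltW.
  nra.
case: (hconv (eta / (4 * (1 + l^-1)))) => [|N1 hN1]; first by rewrite divr_gt0 // mulr_gt0.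
case: (hdist (eta / (4 * (1 + l)))) => [|N2 hN2]; first by rewrite divr_gt0 // mulr_gt0.
set n := maxn N1 N2.
have c1 := hN1 n (leq_maxl _ _); have c2 := hN2 n (leq_maxr _ _).
rewrite nrm2_subC // in c1.
have := nrm2D_le_weighted (l2_sub hx (hy n)) (l2_sub (hy n) hq) hl.
have -> : vadd (vsub x (y n)) (vsub (y n) q) = vsub x q.
  by apply: funext => i; rewrite /vadd /vsub; ring.
have f1 : (1 + l) * nrm2 (vsub x (y n)) <= (1 + l) * (D + eta / (4 * (1 + l))).
  by rewrite ler_wpM2l ?ltW.
have f2 : (1 + l^-1) * nrm2 (vsub (y n) q) <= (1 + l^-1) * (eta / (4 * (1 + l^-1))).
  by rewrite ler_wpM2l ?ltW.
have f3 : (1 + l) * (D + eta / (4 * (1 + l))) = D + l * D + eta / 4.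
  by field; rewrite !gt_eqF ?addr_gt0.
have f4 : (1 + l^-1) * (eta / (4 * (1 + l^-1))) = eta / 4.
  by field; rewrite !gt_eqF ?addr_gt0.
lra.
Qed.

Lemma closest_point_exists (S : set (I -> CC)) x : closed_subspace S -> l2 x ->
  exists2 q, S q & forall z, S z -> nrm2 (vsub x q) <= nrm2 (vsub x z).
Proof.
case=> hSl hS0 hSD hSZ hScl hx.
set A := [set r : RR | exists2 z, S z & r = nrm2 (vsub x z)].
have hA0 : A (nrm2 (vsub x (@vzero I))) by exists (@vzero I).
have hlb : lbound A 0.
  by move=> r [z hz ->]; apply: nrm2_ge0; apply: l2_sub => //; apply: hSl.
have hAlb : has_lbound A by exists 0.
have hinf : has_inf A by split; [exists (nrm2 (vsub x (@vzero I))) | ].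
pose D : RR := inf A.
have hD z : S z -> D <= nrm2 (vsub x z) by move=> hz; apply: (ge_inf hAlb); exists z.
have hD0 : 0 <= D by apply: lb_le_inf => //; exists (nrm2 (vsub x (@vzero I))).
have /choice [y hy] : forall n : nat, exists z, S z /\ nrm2 (vsub x z) < D + n.+1%:R^-1.
  move=> n; have hn : 0 < n.+1%:R^-1 :> RR by rewrite invr_gt0 ltr0Sn.
  by case: (inf_adherent hn hinf) => r [z Sz ->] hr; exists z.
have yS n : S (y n) by case: (hy n).
have yl n : l2 (y n) by apply: hSl.
have ydist (e : RR) : 0 < e -> exists N, forall n, (N <= n)%N -> nrm2 (vsub x (y n)) < D + e.
  move=> he; case: (inv_succ_small he) => N hN; exists N => n hn.
  by case: (hy n) => _ /lt_trans; apply; rewrite ltrD2l; apply: hN.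
have hcauchy (e : RR) : 0 < e -> exists N, forall n m, (N <= n)%N -> (N <= m)%N ->
    nrm2 (vsub (y n) (y m)) < e.
  move=> he; case: (ydist (e / 4)); first by rewrite divr_gt0.
  move=> N hN; exists N => n m hn hm.
  have hmid : S (vscale 2%:R^-1 (vadd (y n) (y m))) by apply: hSZ; apply: hSD.
  have := nrm2_sub_le_midpoint hx (yl n) (yl m) (hD _ hmid).
  by have := hN n hn; have := hN m hm; lra.
case: (l2_complete yl hcauchy) => q hq hconv.
have Sq : S q by apply: hScl => // e he; case: (hconv e he) => N hN; exists (y N) => //; exact: hN.
exists q => // z hz; apply: le_trans (hD z hz).
exact: (nrm2_sub_le_of_cvg hx hq yl hD0 hconv ydist).
Qed.

(* If [x - q] had a nonzero inner product with [z], moving [q] by a small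
   multiple of [z] in that direction would bring it closer to [x]. *)
Lemma closest_point_orth (S : set (I -> CC)) x q : closed_subspace S -> l2 x -> S q ->
  (forall z, S z -> nrm2 (vsub x q) <= nrm2 (vsub x z)) -> ocompl S (vsub x q).
Proof.
case=> hSl _ hSD hSZ _ hx Sq hmin; set w := vsub x q.
have hw : l2 w by apply: l2_sub => //; apply: hSl.
split => // z hz; have hzl : l2 z by apply: hSl.
set a1 := complex.Re (ip w z); set a2 := complex.Im (ip w z).
set Z := nrm2 z; have hZ : 0 <= Z by apply: nrm2_ge0.
set t := (Z + 1)^-1.
have ht : 0 < t by rewrite invr_gt0 ltr_wpDl.
have tZ1 : t * Z <= 1.
  by rewrite ler_pdivrMl ?ltr_wpDl // mulr1 lerDl.
set c : CC := Complex (t * a1) (t * a2).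
have := hmin _ (hSD _ _ Sq (hSZ c _ hz)).
have -> : vsub x (vadd q (vscale c z)) = vsub w (vscale c z).
  by apply: funext => i; rewrite /w /vsub /vadd; ring.
rewrite nrm2_sub_scale // /sqn /= -/a1 -/a2 -/Z => hexp.
set N := a1 ^+ 2 + a2 ^+ 2.
have hN0 : 0 <= N by rewrite addr_ge0 // sqr_ge0.
have e1 : (t * a1) ^+ 2 + (t * a2) ^+ 2 = t ^+ 2 * N by rewrite /N; ring.
have e2 : t * a1 * a1 + t * a2 * a2 = t * N by rewrite /N; ring.
rewrite e1 e2 in hexp.
have p1 : t ^+ 2 * N * Z <= t * N.
  have -> : t ^+ 2 * N * Z = (t * N) * (t * Z) by ring.
  by rewrite ler_piMr // mulr_ge0 // ltW.
have hN : N <= 0.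
  have : t * N <= 0 by lra.
  by rewrite pmulr_rle0.
have /eqP : a1 ^+ 2 = 0 by have := sqr_ge0 a1; have := sqr_ge0 a2; rewrite /N in hN; lra.
have /eqP : a2 ^+ 2 = 0 by have := sqr_ge0 a1; have := sqr_ge0 a2; rewrite /N in hN; lra.
by rewrite !sqrf_eq0 => /eqP z2 /eqP z1; apply: complex_eq0.
Qed.

Lemma projection_theorem (S : set (I -> CC)) x : closed_subspace S -> l2 x ->
  exists2 q, S q & ocompl S (vsub x q).
Proof.
move=> hS hx; case: (closest_point_exists hS hx) => q Sq hmin.
by exists q => //; apply: closest_point_orth.
Qed.
End Projection.

(** * The complement of [S (x) l^2 + l^2 (x) T] *)

Lemma pythagoras (I : countType) (w z : I -> CC) : l2 w -> l2 z -> ip w z = 0 ->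
  nrm2 (vsub w z) = nrm2 w + nrm2 z.
Proof.
move=> hw hz h0; have := nrm2_sub_scale 1 hw hz.
have -> : vscale 1 z = z by apply: funext => i; rewrite /vscale mul1r.
have sqn1 : sqn 1 = 1 by rewrite /sqn /=; simp_i; rewrite expr1n expr0n addr0.
rewrite h0 sqn1 mul1r => ->; congr (_ + _).
by rewrite (_ : complex.Re (0 : CC) = 0) // (_ : complex.Im (0 : CC) = 0) // !mulr0 addr0 mulr0 subr0.
Qed.

Lemma ipBl (I : countType) (x x' y : I -> CC) : l2 x -> l2 x' -> l2 y ->
  ip (vsub x x') y = ip x y - ip x' y.
Proof.
by move=> hx hx' hy; rewrite vsub_addN ipDl ?ipZl ?mulN1r //; apply: l2_scale.
Qed.

Lemma sum_delta (T : eqType) (V : pzRingType) (s : seq T) (f : T -> V) q : uniq s ->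
  \sum_(p <- s) f p * (q == p)%:R = (q \in s)%:R * f q.
Proof.
elim: s => [|a s IH] /=; first by rewrite big_nil mul0r.
case/andP => ha us; rewrite big_cons IH // inE.
case: (eqVneq q a) => [->|hqa] /=.
  by rewrite (negPf ha) mulr1 mul0r addr0 mul1r.
by rewrite mulr0 add0r.
Qed.

Definition evec (I : countType) (i : I) : I -> CC := fun k => ((k == i)%:R : CC).

Lemma l2_evec (I : countType) (i : I) : l2 (evec i).
Proof.
apply: (@l2_bound _ _ 1) => s us; rewrite /psum.
have -> : \sum_(k <- s) sqn (evec i k) = \sum_(k <- s) 1 * (i == k)%:R.
  by apply: eq_bigr => k _; rewrite /evec eq_sym mul1r; case: (i == k); rewrite /sqn /=; simp_i;
     rewrite ?expr0n ?expr1n /= ?addr0.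
by rewrite sum_delta // mulr1; case: (i \in s).
Qed.

Lemma tv_evec (I J : countType) (p q : I * J) : tv (evec p.1) (evec p.2) q = (q == p)%:R.
Proof.
case: p q => [a b] [c d]; rewrite /tv /evec /= xpair_eqE.
by case: (c == a); case: (d == b); rewrite ?mulr1 ?mul1r ?mulr0 ?mul0r.
Qed.

Lemma nrm2_sub_trunc (I : countType) (z : I -> CC) s0 : l2 z -> uniq s0 ->
  nrm2 (vsub z (fun q => (q \in s0)%:R * z q)) <= nrm2 z - psum s0 z.
Proof.
move=> hz us0; apply: nrm2_le => s us; set s1 := [seq k <- s | k \notin s0].
have us' : uniq (s1 ++ s0).
  rewrite cat_uniq filter_uniq //= us0 andbT; apply/hasPn => k hk.
  by rewrite mem_filter hk.
have -> : psum s (vsub z (fun q => (q \in s0)%:R * z q)) = psum s1 z.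
  rewrite /psum /s1 big_filter (bigID (fun k => k \in s0)) /= big1 ?add0r.
    by apply: eq_bigr => k hk; rewrite /vsub (negPf hk) mul0r subr0.
  by move=> k hk; rewrite /vsub hk mul1r subrr sqn0.
by have := psum_le_nrm2 hz us'; rewrite /psum big_cat /=; lra.
Qed.

Section TensorComplement.
Variables I J : countType.
Variables (S : set (I -> CC)) (T : set (J -> CC)).

Definition tensor_gens (F : set (I -> CC)) (G : set (J -> CC)) : set ((I * J)%type -> CC) :=
  [set z | exists x y, F x /\ G y /\ z = tv x y].

(* Generators of the closed subspace [S (x) l^2 + l^2 (x) T]. *)
Definition side_tensors : set ((I * J)%type -> CC) :=
  [set g | (exists a y, [/\ S a, l2 y & g = tv a y]) \/
           (exists y h, [/\ l2 y, T h & g = tv y h])].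

Hypotheses (S_l2 : S `<=` l2) (T_l2 : T `<=` l2).

Lemma l2_side_tensors : side_tensors `<=` l2.
Proof.
by move=> g [[a [y [ha hy ->]]]|[y [h [hy hh ->]]]]; apply: l2_tv => //;
  [apply: S_l2 | apply: T_l2].
Qed.

Lemma l2_tensor_gens_ocompl : tensor_gens (ocompl S) (ocompl T) `<=` l2.
Proof. by move=> g [a [b [[ha _] [[hb _] ->]]]]; apply: l2_tv. Qed.

Lemma ip_tensor_gens_side f g : tensor_gens (ocompl S) (ocompl T) f ->
  side_tensors g -> ip f g = 0.
Proof.
move=> [a [b [[al ha] [[bl hb] ->]]]].
case=> [[c [y [hc hy ->]]]|[y [h [hy hh ->]]]].
  by apply: ip_tv0l => //; [exact: S_l2 | exact: ha].
by apply: ip_tv0r => //; [exact: T_l2 | exact: hb].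
Qed.

(* Given decompositions [e_i = QS i + PS i] and [e_j = QT j + PT j] with
   [QS i] in [S], [QT j] in [T], we have
   [e_i (x) e_j - PS i (x) PT j = QS i (x) e_j + PS i (x) QT j]. *)
Lemma span_side_tensors_sum (QS : I -> I -> CC) (QT : J -> J -> CC) (s : seq (I * J))
    (c : I * J -> CC) :
  (forall i, S (QS i)) -> (forall j, T (QT j)) ->
  Defs.span side_tensors (fun q => \sum_(p <- s) c p *
    (tv (QS p.1) (evec p.2) q + tv (vsub (evec p.1) (QS p.1)) (QT p.2) q)).
Proof.
move=> hQS hQT; apply: span_sum => p.
have -> : (fun q => c p * (tv (QS p.1) (evec p.2) q + tv (vsub (evec p.1) (QS p.1)) (QT p.2) q)) =
  vadd (vscale (c p) (tv (QS p.1) (evec p.2)))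
       (vscale (c p) (tv (vsub (evec p.1) (QS p.1)) (QT p.2))).
  by apply: funext => q; rewrite /vadd /vscale mulrDr.
apply: span_add; apply: span_scale; apply: span_gen.
  by left; exists (QS p.1), (evec p.2); split => //; apply: l2_evec.
right; exists (vsub (evec p.1) (QS p.1)), (QT p.2); split => //.
by apply: l2_sub; [apply: l2_evec | apply: S_l2].
Qed.
Lemma ip_span_tensor_gens_side w v :
  Defs.span (tensor_gens (ocompl S) (ocompl T)) w -> Defs.span side_tensors v -> ip w v = 0.
Proof.
move=> hw hv; have hside := l2_side_tensors.
have hgens := l2_tensor_gens_ocompl; have hwl := span_l2 hgens hw.
apply: (ip_span_eq0 hside hwl _ hv) => g hg.
apply: ip_eq0C; [exact: hside | exact: hwl |].
apply: (ip_span_eq0 hgens (hside _ hg) _ hw) => f hf.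
by apply: ip_eq0C; [exact: hgens | exact: hside | exact: ip_tensor_gens_side].
Qed.
End TensorComplement.

Lemma evec_projections (I : countType) (S : set (I -> CC)) : closed_subspace S ->
  exists Q : I -> I -> CC, forall i, S (Q i) /\ ocompl S (vsub (evec i) (Q i)).
Proof.
move=> hS; have /choice [Q hQ] : forall i : I, exists q, S q /\ ocompl S (vsub (evec i) q).
  by move=> i; case: (projection_theorem hS (l2_evec i)) => q h1 h2; exists q.
by exists Q.
Qed.

(* The orthogonal complement of [S (x) l^2 + l^2 (x) T] is [S^perp (x) T^perp]:
   truncate [z] to finitely many basis tensors [e_i (x) e_j], split each
   [e_i (x) e_j] along the projections onto [S^perp] and [T^perp], and
   note that the part in [S (x) l^2 + l^2 (x) T] only moves [z] closer. *)
Lemma tsub_ocompl_of_orth (I J : countType) (S : set (I -> CC)) (T : set (J -> CC))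
    (z : (I * J) -> CC) :
  closed_subspace S -> closed_subspace T -> l2 z ->
  (forall g y, S g -> l2 y -> ip z (tv g y) = 0) ->
  (forall h y, T h -> l2 y -> ip z (tv y h) = 0) ->
  tsub (ocompl S) (ocompl T) z.
Proof.
move=> hS hT hz zS zT; have hSl : S `<=` l2 by case: hS.
have hTl : T `<=` l2 by case: hT.
case: (evec_projections hS) => QS hQS; case: (evec_projections hT) => QT hQT.
split => // e he; case: (nrm2_adherent hz he) => s0 us0 hs0.
pose PS i := vsub (evec i) (QS i); pose PT j := vsub (evec j) (QT j).
pose w q := \sum_(p <- s0) z p * tv (PS p.1) (PT p.2) q.
pose v q := \sum_(p <- s0) z p * (tv (QS p.1) (evec p.2) q + tv (PS p.1) (QT p.2) q).
have w_span : Defs.span (tensor_gens (ocompl S) (ocompl T)) w.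
  apply: span_sum => p; apply: (@span_scale _ _ (z p) (tv (PS p.1) (PT p.2))).
  apply: span_gen; exists (PS p.1), (PT p.2).
  by split; [case: (hQS p.1) | split; [case: (hQT p.2) |]].
have v_span : Defs.span (side_tensors S T) v.
  by apply: (@span_side_tensors_sum _ _ S T hSl QS QT) => [i|j];
    [case: (hQS i) | case: (hQT j)].
have hside := l2_side_tensors hSl hTl.
have hw := span_l2 (@l2_tensor_gens_ocompl _ _ S T) w_span.
have hv := span_l2 hside v_span.
have zv : ip z v = 0.
  apply: (ip_span_eq0 hside hz _ v_span).
  by move=> g [[a [y [ha hy ->]]]|[y [h [hy hh ->]]]]; [exact: zS | exact: zT].
have wv : ip w v = 0 by apply: (ip_span_tensor_gens_side hSl hTl).
have trunc : vadd v w = fun q => (q \in s0)%:R * z q.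
  apply: funext => q; rewrite -sum_delta // /vadd /v /w -big_split /=.
  by apply: eq_bigr => p _; rewrite -tv_evec /tv /PS /PT /vsub; ring.
exists w => //.
have close : nrm2 (vsub z (vadd v w)) < e.
  by rewrite trunc; apply: le_lt_trans (nrm2_sub_trunc hz us0) _; lra.
apply: le_lt_trans close.
have -> : vsub z (vadd v w) = vsub (vsub z w) v by apply: funext => q; rewrite /vsub /vadd; ring.
have hzw := l2_sub hz hw.
have hzwv : ip (vsub z w) v = 0 by rewrite ipBl // zv wv subr0.
by rewrite (pythagoras hzw hv hzwv) lerDl nrm2_ge0.
Qed.

(** * Unitaries and amplifications *)

Section Unitary.
Variables I J K : countType.
Variable U : (I -> CC) -> (J -> CC).
Hypothesis hU : unitary U.
Implicit Types x y : I -> CC.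

Lemma U_l2 x : l2 x -> l2 (U x). Proof. by case: hU => h _ _ _ _; apply: h. Qed.
Lemma U_add x y : l2 x -> l2 y -> U (vadd x y) = vadd (U x) (U y).
Proof. by case: hU => _ h _ _ _; apply: h. Qed.
Lemma U_scale c x : l2 x -> U (vscale c x) = vscale c (U x).
Proof. by case: hU => _ _ h _ _; apply: h. Qed.
Lemma U_nrm2 x : l2 x -> nrm2 (U x) = nrm2 x. Proof. by case: hU => _ _ _ h _; apply: h. Qed.
Lemma U_surj (z : J -> CC) : l2 z -> exists2 x, l2 x & U x = z.
Proof. by case: hU => _ _ _ _ h; apply: h. Qed.

Lemma U_sub x y : l2 x -> l2 y -> U (vsub x y) = vsub (U x) (U y).
Proof.
by move=> hx hy; rewrite !vsub_addN (U_add hx (l2_scale (-1) hy)) (U_scale (-1) hy).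
Qed.

Lemma U_inj x y : l2 x -> l2 y -> U x = U y -> x = y.
Proof.
move=> hx hy hxy; have hxy' := l2_sub hx hy.
have : nrm2 (vsub x y) <= 0.
  rewrite -(U_nrm2 hxy') (U_sub hx hy) hxy.
  have -> : vsub (U y) (U y) = @vzero J by apply: funext => i; rewrite /vsub subrr.
  by rewrite nrm2_zero.
move/(nrm2_le0 hxy') => h; apply: funext => i.
by apply/eqP; rewrite -subr_eq0; apply/eqP; have := congr1 (fun f => f i) h.
Qed.

Lemma U_ip x y : l2 x -> l2 y -> ip (U x) (U y) = ip x y.
Proof.
move=> hx hy; apply: complex_eq.
  rewrite !Re_ip -U_add // -U_sub // !U_nrm2 //; [exact: l2_sub | exact: l2_add].
have hiy := l2_scale 'i hy.
rewrite !Im_ip -(U_scale 'i hy) -(U_add hx hiy) -(U_sub hx hiy) !U_nrm2 //.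
  exact: l2_sub.
exact: l2_add.
Qed.

Lemma l2_slice_l (W : (I * K) -> CC) k : l2 W -> l2 (fun a => W (a, k)).
Proof.
move=> hW; apply: (@l2_bound _ _ (nrm2 W)) => s us.
have -> : psum s (fun a => W (a, k)) = psum [seq (a, k) | a <- s] W by rewrite /psum big_map.
by apply: psum_le_nrm2 => //; rewrite map_inj_uniq // => a b [->].
Qed.

Lemma l2_slice_r (W : (K * I) -> CC) k : l2 W -> l2 (fun a => W (k, a)).
Proof.
move=> hW; apply: (@l2_bound _ _ (nrm2 W)) => s us.
have -> : psum s (fun a => W (k, a)) = psum [seq (k, a) | a <- s] W by rewrite /psum big_map.
by apply: psum_le_nrm2 => //; rewrite map_inj_uniq // => a b [->].
Qed.

Lemma ampl_l_tv (g : I -> CC) (y : K -> CC) : l2 g -> ampl_l U (tv g y) = tv (U g) y.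
Proof.
move=> hg; apply: funext => p; rewrite /ampl_l /tv.
have -> : (fun a => g (a, p.2).1 * y (a, p.2).2) = vscale (y p.2) g.
  by apply: funext => a; rewrite /vscale /= mulrC.
by rewrite U_scale // /vscale mulrC.
Qed.

Lemma ampl_r_tv (a : K -> CC) (g : I -> CC) : l2 g -> ampl_r U (tv a g) = tv a (U g).
Proof.
move=> hg; apply: funext => p; rewrite /ampl_r /tv.
have -> : (fun b => a (p.1, b).1 * g (p.1, b).2) = vscale (a p.1) g by [].
by rewrite U_scale.
Qed.

Lemma ampl_l_inj (W1 W2 : (I * K) -> CC) : l2 W1 -> l2 W2 ->
  ampl_l U W1 = ampl_l U W2 -> W1 = W2.
Proof.
move=> h1 h2 h; apply: funext => -[i k].
have : U (fun a => W1 (a, k)) = U (fun a => W2 (a, k)).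
  by apply: funext => j; have := congr1 (fun f => f (j, k)) h.
by move/(U_inj (l2_slice_l k h1) (l2_slice_l k h2))/(congr1 (fun f => f i)).
Qed.

Lemma ampl_r_inj (W1 W2 : (K * I) -> CC) : l2 W1 -> l2 W2 ->
  ampl_r U W1 = ampl_r U W2 -> W1 = W2.
Proof.
move=> h1 h2 h; apply: funext => -[k i].
have : U (fun a => W1 (k, a)) = U (fun a => W2 (k, a)).
  by apply: funext => j; have := congr1 (fun f => f (k, j)) h.
by move/(U_inj (l2_slice_r k h1) (l2_slice_r k h2))/(congr1 (fun f => f i)).
Qed.
End Unitary.

Lemma reassoc_tv (I J K : countType) (a : I -> CC) (b : J -> CC) (c : K -> CC) :
  reassoc (tv (tv a b) c) = tv a (tv b c).
Proof. by apply: funext => p; rewrite /reassoc /tv /= mulrA. Qed.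

Lemma reassoc_inj (I J K : countType) (f g : ((I * J) * K) -> CC) :
  reassoc f = reassoc g -> f = g.
Proof. by move=> h; apply: funext => -[[i j] k]; have := congr1 (fun F => F (i, (j, k))) h. Qed.

Section Casts.
Variable Ind : RR -> countType.

Lemma castv_irr (u v : RR) (e e' : u = v) (x : Ind u -> CC) : castv e x = castv e' x.
Proof. by rewrite (eq_irrelevance e e'). Qed.

Lemma castv_comp (u v w : RR) (e1 : u = v) (e2 : v = w) (x : Ind u -> CC) :
  castv e2 (castv e1 x) = castv (etrans e1 e2) x.
Proof. by move: e2; case: v / e1 => e2 /=; apply: castv_irr. Qed.

Lemma l2_castv (u v : RR) (e : u = v) (x : Ind u -> CC) : l2 x -> l2 (castv e x).
Proof. by case: v / e. Qed.

Lemma ocompl_castv (P : forall t, set (Ind t -> CC)) (u v : RR) (e : u = v) (b : Ind u -> CC) :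
  ocompl (P u) b -> ocompl (P v) (castv e b).
Proof. by case: v / e. Qed.

Definition castl (t u v : RR) (e : u = v) (z : (Ind u * Ind t)%type -> CC) :
  (Ind v * Ind t)%type -> CC := eq_rect u (fun w => (Ind w * Ind t)%type -> CC) z v e.
Definition castr (r u v : RR) (e : u = v) (z : (Ind r * Ind u)%type -> CC) :
  (Ind r * Ind v)%type -> CC := eq_rect u (fun w => (Ind r * Ind w)%type -> CC) z v e.

Lemma castl_tv (t u v : RR) (e : u = v) (a : Ind u -> CC) (b : Ind t -> CC) :
  castl e (tv a b) = tv (castv e a) b.
Proof. by case: v / e. Qed.

Lemma castr_tv (r u v : RR) (e : u = v) (a : Ind r -> CC) b :
  castr e (tv a b) = tv a (castv e b).
Proof. by case: v / e. Qed.

Unset Implicit Arguments.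
Variable B : forall s t : RR, (Ind (s + t) -> CC) -> ((Ind s * Ind t)%type -> CC).
Set Implicit Arguments.

Lemma B_castl (t u v : RR) (e : u = v) (x : Ind (u + t) -> CC) :
  B v t (castv (congr1 (fun a => a + t) e) x) = castl e (B u t x).
Proof. by case: v / e. Qed.

Lemma B_castr (r u v : RR) (e : u = v) (x : Ind (r + u) -> CC) :
  B r v (castv (congr1 (fun a => r + a) e) x) = castr e (B r u x).
Proof. by case: v / e. Qed.
End Casts.

(** * Product systems *)

(* [Ftilde B F u] unfolds to [cspan (Ftilde_gen B F u)]. *)
Definition Ftilde_gen (Ind : RR -> countType)
  (B : forall s t : RR, (Ind (s + t) -> CC) -> ((Ind s * Ind t)%type -> CC))
  (F : forall t : RR, set (Ind t -> CC)) (u : RR) : set (Ind u -> CC) :=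
  [set z | l2 z /\ exists r : RR, [/\ 0 < r, r < u &
           exists x y, [/\ ocompl (F r) x, ocompl (F (u - r)) y &
              B r (u - r) (castv (split_time r u) z) = tv x y]]].

Arguments Ftilde_gen {Ind} B F u.

Section ProductSystem.
Variable Ind : RR -> countType.
Unset Implicit Arguments.
Variable B : forall s t : RR, (Ind (s + t) -> CC) -> ((Ind s * Ind t)%type -> CC).
Variable F : forall t : RR, set (Ind t -> CC).
Set Implicit Arguments.
Hypothesis B_prod : product_system B.
Hypothesis F_incl : inclusion_subsystem B F.


Lemma B_unitary s t : 0 < s -> 0 < t -> unitary (B s t).
Proof. by case: B_prod => h _; apply: h. Qed.

Lemma Ftilde_gen_l2 (u : RR) : Ftilde_gen B F u `<=` l2.
Proof. by move=> z []. Qed.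

Lemma l2_F (u : RR) : 0 < u -> F u `<=` l2.
Proof. by case: F_incl => hF _ hu; case: (hF _ hu). Qed.

Lemma ocompl_F_of_B s t (hs : 0 < s) (ht : 0 < t) (w : Ind (s + t) -> CC) : l2 w ->
  (forall f, tensor_gens (F s) (F t) f -> ip (B s t w) f = 0) -> ocompl (F (s + t)) w.
Proof.
move=> hw h; split => // f hf; have hU := B_unitary hs ht.
have fl : l2 f by apply: (l2_F (addr_gt0 hs ht)).
rewrite -(U_ip hU hw fl); apply: (ip_cspan_eq0 _ (U_l2 hU hw) h).
  by move=> _ [p [q [hp [hq ->]]]]; apply: l2_tv; [exact: (l2_F hs) | exact: (l2_F ht)].
by case: F_incl => _; apply.
Qed.

(* Associativity of [B] moves the cut of [g (x) y] from [s] to [r]. *)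
Lemma B_assoc_tvl r s t (hr : 0 < r) (hrs : r < s) (ht : 0 < t) g y w a b b2
    (e : s - r + t = s + t - r) :
  l2 g -> l2 w -> l2 a -> l2 b2 ->
  B s t w = tv g y -> B r (s - r) (castv (split_time r s) g) = tv a b ->
  B (s - r) t b2 = tv b y ->
  B r (s + t - r) (castv (split_time r (s + t)) w) = tv a (castv e b2).
Proof.
move=> hg hw ha hb2 hBw hab hBb2; have hsr : 0 < s - r by rewrite subr_gt0.
pose X := castv (congr1 (fun u => u + t) (split_time r s)) w.
have hAs := B_prod.2 r (s - r) t hr hsr ht X (l2_castv _ hw).
rewrite /X B_castl hBw castl_tv (ampl_l_tv (B_unitary hr hsr) y (l2_castv _ hg)) hab
  reassoc_tv in hAs.
pose Y := castv (esym (addrA r (s - r) t)) X.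
have hW : B r (s - r + t) Y = tv a b2.
  have hY : l2 Y by apply/l2_castv/l2_castv.
  apply: (ampl_r_inj (B_unitary hsr ht) (U_l2 (B_unitary hr (addr_gt0 hsr ht)) hY)
    (l2_tv ha hb2)).
  by rewrite (ampl_r_tv (B_unitary hsr ht) a hb2) hBb2 -hAs.
rewrite -castr_tv -hW -B_castr; congr (B r (s + t - r)).
by rewrite /Y /X !castv_comp; apply: castv_irr.
Qed.

(* Associativity of [B] moves the cut of [y (x) g] from [s] to [s + r]. *)
Lemma B_assoc_tvr r s t (hs : 0 < s) (hr : 0 < r) (hrt : r < t) g y w a b a2
    (e : t - r = s + t - (s + r)) :
  l2 g -> l2 w -> l2 b -> l2 a2 ->
  B s t w = tv y g -> B r (t - r) (castv (split_time r t) g) = tv a b ->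
  B s r a2 = tv y a ->
  B (s + r) (s + t - (s + r)) (castv (split_time (s + r) (s + t)) w) = tv a2 (castv e b).
Proof.
move=> hg hw hb ha2 hBw hab hBa2; have htr : 0 < t - r by rewrite subr_gt0.
have e0 : s + t = s + r + (t - r) by ring.
pose X := castv e0 w; have hX : l2 X by apply: l2_castv.
have hAs := B_prod.2 s r (t - r) hs hr htr X hX.
have eX : castv (esym (addrA s r (t - r))) X =
    castv (congr1 (fun u => s + u) (split_time r t)) w.
  by rewrite /X castv_comp; apply: castv_irr.
rewrite eX B_castr hBw castr_tv (ampl_r_tv (B_unitary hr htr) y (l2_castv _ hg)) hab in hAs.
have hW : B (s + r) (t - r) X = tv a2 b.
  have hsr := B_unitary hs hr.
  apply: (ampl_l_inj hsr (U_l2 (B_unitary (addr_gt0 hs hr) htr) hX) (l2_tv ha2 hb)).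
  by apply: reassoc_inj; rewrite hAs (ampl_l_tv hsr b ha2) hBa2 reassoc_tv.
rewrite -castr_tv -hW -B_castr; congr (B (s + r) (s + t - (s + r))).
by rewrite /X castv_comp; apply: castv_irr.
Qed.

Lemma Ftilde_gen_tvl s t (hs : 0 < s) (ht : 0 < t) g y (w : Ind (s + t) -> CC) :
  Ftilde_gen B F s g -> l2 y -> l2 w -> B s t w = tv g y -> Ftilde_gen B F (s + t) w.
Proof.
move=> [hg [r [hr hrs [a [b [ha hb hab]]]]]] hy hw hBw.
have hsr : 0 < s - r by rewrite subr_gt0.
have [hbl hb0] := hb.
case: (U_surj (B_unitary hsr ht) (l2_tv hbl hy)) => b2 hb2 hBb2.
have e : s - r + t = s + t - r by ring.
split => //; exists r; split => //; first lra.
have [hal _] := ha.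
exists a, (castv e b2); split.
- exact: ha.
- apply/ocompl_castv/(ocompl_F_of_B hsr ht hb2) => _ [p [q [hp [hq ->]]]].
  rewrite hBb2; apply: ip_tv0l => //; [exact: (l2_F hsr) | exact: (l2_F ht) | exact: hb0].
- exact: (B_assoc_tvl hr hrs ht e hg hw hal hb2 hBw hab hBb2).
Qed.

Lemma Ftilde_gen_tvr s t (hs : 0 < s) (ht : 0 < t) g y (w : Ind (s + t) -> CC) :
  Ftilde_gen B F t g -> l2 y -> l2 w -> B s t w = tv y g -> Ftilde_gen B F (s + t) w.
Proof.
move=> [hg [r [hr hrt [a [b [ha hb hab]]]]]] hy hw hBw.
have [hal ha0] := ha.
case: (U_surj (B_unitary hs hr) (l2_tv hy hal)) => a2 ha2 hBa2.
have e : t - r = s + t - (s + r) by ring.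
split => //; exists (s + r); split; [exact: addr_gt0 | lra |].
have [hbl _] := hb.
exists a2, (castv e b); split.
- apply: (ocompl_F_of_B hs hr ha2) => _ [p [q [hp [hq ->]]]].
  rewrite hBa2; apply: ip_tv0r => //; [exact: (l2_F hs) | exact: (l2_F hr) | exact: ha0].
- exact: ocompl_castv.
- exact: (B_assoc_tvr hs hr hrt e hg hw hbl ha2 hBw hab hBa2).
Qed.

Lemma ip_B_Fprime s t (hs : 0 < s) (ht : 0 < t) (x w : Ind (s + t) -> CC) :
  Fprime B F (s + t) x -> Ftilde_gen B F (s + t) w -> ip (B s t x) (B s t w) = 0.
Proof.
move=> [hx hx0] hw; rewrite (U_ip (B_unitary hs ht) hx (Ftilde_gen_l2 hw)).
by apply: hx0; exact: (span_cspan (@Ftilde_gen_l2 (s + t)) (span_gen hw)).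
Qed.

Lemma ip_B_Fprime_tvl s t (hs : 0 < s) (ht : 0 < t) x g y :
  Fprime B F (s + t) x -> Ftilde_gen B F s g -> l2 y -> ip (B s t x) (tv g y) = 0.
Proof.
move=> hx hg hy; have hU := B_unitary hs ht.
case: (U_surj hU (l2_tv (Ftilde_gen_l2 hg) hy)) => w hw hBw.
by rewrite -hBw; apply: (ip_B_Fprime hs ht hx); exact: (Ftilde_gen_tvl hs ht hg hy hw hBw).
Qed.

Lemma ip_B_Fprime_tvr s t (hs : 0 < s) (ht : 0 < t) x g y :
  Fprime B F (s + t) x -> Ftilde_gen B F t g -> l2 y -> ip (B s t x) (tv y g) = 0.
Proof.
move=> hx hg hy; have hU := B_unitary hs ht.
case: (U_surj hU (l2_tv hy (Ftilde_gen_l2 hg))) => w hw hBw.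
by rewrite -hBw; apply: (ip_B_Fprime hs ht hx); exact: (Ftilde_gen_tvr hs ht hg hy hw hBw).
Qed.
End ProductSystem.

Unset Implicit Arguments.
Set Strict Implicit.
Theorem mainTheorem12 (Ind : RR -> countType)
  (B : forall s t : RR, (Ind (s + t) -> CC) -> ((Ind s * Ind t)%type -> CC))
  (F : forall t : RR, set (Ind t -> CC)) :
  product_system B -> inclusion_subsystem B F ->
  forall s t : RR, 0 < s -> 0 < t ->
    forall x, Fprime B F (s + t) x ->
      tsub (Fprime B F s) (Fprime B F t) (B s t x).
Proof.
move=> hB hF s t hs ht x hx.
have hBx : l2 (B s t x) by apply: (U_l2 (B_unitary hB hs ht)); case: hx.
apply: tsub_ocompl_of_orth => //; try exact/closed_subspace_cspan/Ftilde_gen_l2.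
- move=> g y hg hy; apply: (ip_cspan_eq0 _ hBx _ (cspan_tvl (@Ftilde_gen_l2 _ B F s) hy hg)).
    by move=> _ [g' hg' <-]; apply: l2_tv => //; exact: Ftilde_gen_l2 hg'.
  by move=> _ [g' hg' <-]; exact: (ip_B_Fprime_tvl hB hF hs ht hx hg' hy).
- move=> h y hh hy; apply: (ip_cspan_eq0 _ hBx _ (cspan_tvr (@Ftilde_gen_l2 _ B F t) hy hh)).
    by move=> _ [h' hh' <-]; apply: l2_tv => //; exact: Ftilde_gen_l2 hh'.
  by move=> _ [h' hh' <-]; exact: (ip_B_Fprime_tvr hB hF hs ht hx hh' hy).
Qed.
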